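(* Assume $k(c)<0$ for all $c\in[0,1]$. For each $c\in[0,1)$ the equation (in $x\in\mathbb R$) $$\frac{\psi_\lambda(x)}{\psi'_\lambda(x)}=x-\overline x_0(c)$$ has a unique solution $\gamma(c)$, and $\gamma(c)\in(\overline x_0(c),+\infty)$; the map $\gamma$ is decreasing and $C^1$ on $[0,1)$. Define, for $c\in[0,1)$, $$W(x,c):=\begin{cases}\dfrac{\psi_\lambda(x)}{\psi_\lambda(\gamma(c))}\Big[\gamma(c)(1-c)-\lambda\Phi(c)\Big(\dfrac{\gamma(c)-\mu}{\lambda+\theta}+\dfrac{\mu}{\lambda}\Big)\Big]+\lambda\Phi(c)\Big[\dfrac{x-\mu}{\lambda+\theta}+\dfrac{\mu}{\lambda}\Big],& x<\gamma(c),\\[4pt] x(1-c),& x\ge\gamma(c),\end{cases}$$ and $W(x,1):=0$. Then $W\in W^{2,1,\infty}_{loc}(\mathbb R\times(0,1))$ and $(W,\gamma)$ satisfies: $\mathbb L_XW(x,c)-\lambda W(x,c)=-\lambda x\Phi(c)$ for $x<\gamma(c)$, $c\in[0,1)$; $W_c(x,c)\ge -x$ for all $(x,c)$; $W(x,c)=x(1-c)$ for $x\ge\gamma(c)$; $W_x(\gamma(c),c)=1-c$. Moreover $W_c(\gamma(c),c)=-\gamma(c)$, while the left limit satisfies $\lim_{x\uparrow\gamma(c)}W_{cx}(x,c)<-1$, so that $x\mapsto W_c(x,c)$ is not $C^1$ across $\gamma(c)$ (on $x>\gamma(c)$ one has $W_{cx}=-1$).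
   Context: Fix $\theta,\sigma,\mu,\lambda>0$; $\mathbb L_Xf(x):=\frac12\sigma^2f''(x)+\theta(\mu-x)f'(x)$ acting in $x$. $\Phi\in C^2(\mathbb R)$ is nonincreasing and strictly convex with $\Phi(1)=0$; $k(c):=\lambda+\theta+\lambda\Phi'(c)$. $\zeta(c):=\int_c^1k(y)dy=(\lambda+\theta)(1-c)-\lambda\Phi(c)$ (negative on $[0,1)$ under the hypothesis), and $\overline x_0(c):=\theta\mu\Phi(c)/\zeta(c)$ for $c\in[0,1)$. $\psi_\lambda(x):=e^{\frac{\theta(x-\mu)^2}{2\sigma^2}}D_{-\lambda/\theta}\big(-\frac{(x-\mu)\sqrt{2\theta}}{\sigma}\big)$, with $D_\alpha(z)=\frac{e^{-z^2/4}}{\Gamma(-\alpha)}\int_0^\infty t^{-\alpha-1}e^{-t^2/2-zt}dt$ ($\alpha<0$) the parabolic cylinder function; $\psi_\lambda$ is the positive, strictly increasing, strictly convex solution of $\mathbb L_Xf=\lambda f$. $W^{2,1,\infty}_{loc}$ denotes functions whose weak derivatives $W_x,W_{xx},W_c$ are locally essentially bounded. *)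

From Stdlib Require Import Reals Lra ClassicalEpsilon.
Open Scope R_scope.

Definition improper_0_inf (f : R -> R) (L : R) : Prop :=
  forall eps, 0 < eps ->
    exists a0, 0 < a0 /\ exists b0,
      forall a b, 0 < a < a0 -> b0 < b ->
        exists pr : Riemann_integrable f a b, Rabs (RiemannInt pr - L) < eps.

(** Its value (chosen via classical choice; unique when it converges). *)
Definition Iinf (f : R -> R) : R :=
  epsilon (inhabits 0) (fun L => improper_0_inf f L).

Definition Gamma (s : R) : R :=
  Iinf (fun t => Rpower t (s - 1) * exp (- t)).

(** Parabolic cylinder function D_alpha(z) (alpha < 0), integral representation. *)
Definition Dpc (alpha z : R) : R :=
  exp (- z ^ 2 / 4) / Gamma (- alpha) *
  Iinf (fun t => Rpower t (- alpha - 1) * exp (- t ^ 2 / 2 - z * t)).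

Definition psi (theta sigma mu lam x : R) : R :=
  exp (theta * (x - mu) ^ 2 / (2 * sigma ^ 2)) *
  Dpc (- lam / theta) (- (x - mu) * sqrt (2 * theta) / sigma).

(** The derivative of f at x (junk value if f is not differentiable at x). *)
Definition Deriv (f : R -> R) (x : R) : R :=
  epsilon (inhabits 0) (fun l => derivable_pt_lim f x l).

(** Derivative of f at x within the set D (one-sided at boundary points). *)
Definition deriv_within (D : R -> Prop) (f : R -> R) (x l : R) : Prop :=
  limit1_in (fun y => (f y - f x) / (y - x)) (fun y => D y /\ y <> x) l x.

Definition I01 (c : R) : Prop := 0 <= c < 1.

Definition kfun (theta lam : R) (dPhi : R -> R) (c : R) : R :=
  lam + theta + lam * dPhi c.
Definition zeta (theta lam : R) (Phi : R -> R) (c : R) : R :=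
  (lam + theta) * (1 - c) - lam * Phi c.
Definition x0bar (theta mu lam : R) (Phi : R -> R) (c : R) : R :=
  theta * mu * Phi c / zeta theta lam Phi c.

Definition Wfun (theta sigma mu lam : R) (Phi gamma : R -> R) (x c : R) : R :=
  if Rle_dec 1 c then 0
  else if Rlt_dec x (gamma c) then
    psi theta sigma mu lam x / psi theta sigma mu lam (gamma c) *
      (gamma c * (1 - c)
       - lam * Phi c * ((gamma c - mu) / (lam + theta) + mu / lam))
    + lam * Phi c * ((x - mu) / (lam + theta) + mu / lam)
  else x * (1 - c).

(** The argument rests on the integral representation
    [psi_lambda x = J_s (k (mu - x)) / Gamma s] with [s = lambda/theta],
    [k = sqrt (2 theta) / sigma] and [J_p z = int_0^oo t^(p-1) exp (- t^2/2 - z t) dt].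
    Differentiation under the integral ([J_p' = - J_(p+1)]) and integration by parts
    ([J_(p+2) + z J_(p+1) = p J_p]) show that [psi], [psi'], [psi''] are positive and that
    [L_X psi = lambda psi].  Then [h x = x - psi x / psi' x] has derivative
    [psi psi'' / psi'^2 > 0] and is onto: the ODE bounds [h] above by an affine function
    tending to [-oo] at [-oo], and if [h] were bounded above it would force [h' >= 2] far to
    the right.  Hence [gamma = h^-1 o x0bar] is well defined and C^1.  Since [k < 0] and
    [zeta 1 = 0], [zeta < 0] on [0,1), and [x0bar'] has the sign of [Phi c + Phi' c (1 - c)],
    which is negative by strict convexity and [Phi 1 = 0]; so [gamma] decreases.
    Below [gamma c], [W] is [B c * psi x] plus an affine function of [x], with
    [B = zeta / ((lambda + theta) psi'(gamma))]; this gives the ODE, and the smooth fit and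
    [W_c (gamma c) = - gamma c] reduce to [psi/psi' = gamma - x0bar] at [gamma].
    Finally [W_cx + 1 = - zeta gamma' psi''(gamma) / ((lambda+theta) psi'(gamma)) < 0] at the
    boundary and [W_cx + 1] stays negative on the left because [psi'] is increasing and
    [lambda Phi' / (lambda + theta) + 1 = k / (lambda + theta) < 0]; integrating from
    [gamma c] gives [W_c >= - x]. *)

From Coquelicot Require Import Coquelicot.
From Stdlib Require Import Reals Ranalysis5 Lra Psatz ClassicalEpsilon FunctionalExtensionality.
Open Scope R_scope.

Lemma Rpower_gt_0 t q : 0 < Rpower t q.
Proof. apply exp_pos. Qed.

Lemma Rpower_minus_1 t q : 0 < t -> Rpower t (q - 1) = Rpower t q / t.
Proof.
  intros Ht. replace (q - 1) with (q + -1) by ring. rewrite Rpower_plus.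
  unfold Rpower at 2. replace (-1 * ln t) with (- ln t) by ring.
  rewrite exp_Ropp, exp_ln; auto.
Qed.

Lemma Rpower_plus_1 t q : 0 < t -> Rpower t (q + 1) = Rpower t q * t.
Proof. intros Ht. rewrite Rpower_plus, Rpower_1; auto. Qed.

(** * Improper integrals on (0, +oo) *)

Definition is_RInt_0_oo (f : R -> R) (L : R) : Prop :=
  forall eps, 0 < eps -> exists a0, 0 < a0 /\ exists b0,
    forall a b, 0 < a < a0 -> b0 < b -> ex_RInt f a b /\ Rabs (RInt f a b - L) < eps.

Lemma is_RInt_0_oo_improper f L : is_RInt_0_oo f L <-> improper_0_inf f L.
Proof.
  split; intros H eps He; destruct (H eps He) as [a0 [Ha0 [b0 Hb]]];
    exists a0; split; auto; exists b0; intros a b Ha Hb'.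
  - destruct (Hb a b Ha Hb') as [Hex Hl].
    exists (ex_RInt_Reals_0 _ _ _ Hex). rewrite <- RInt_Reals. auto.
  - destruct (Hb a b Ha Hb') as [pr Hl].
    split; [apply ex_RInt_Reals_1; auto | rewrite (RInt_Reals _ _ _ pr); auto].
Qed.

Lemma is_RInt_0_oo_pair f g L M eps :
  is_RInt_0_oo f L -> is_RInt_0_oo g M -> 0 < eps ->
  exists a0, 0 < a0 /\ exists b0, forall a b, 0 < a < a0 -> b0 < b ->
    ex_RInt f a b /\ Rabs (RInt f a b - L) < eps /\
    ex_RInt g a b /\ Rabs (RInt g a b - M) < eps.
Proof.
  intros Hf Hg He.
  destruct (Hf eps He) as [a1 [Ha1 [b1 H1]]].
  destruct (Hg eps He) as [a2 [Ha2 [b2 H2]]].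
  exists (Rmin a1 a2); split; [apply Rmin_glb_lt; auto|].
  exists (Rmax b1 b2). intros a b Ha Hb.
  pose proof (Rmin_l a1 a2); pose proof (Rmin_r a1 a2).
  pose proof (Rmax_l b1 b2); pose proof (Rmax_r b1 b2).
  destruct (H1 a b) as [? ?]; try lra. destruct (H2 a b) as [? ?]; try lra.
  repeat split; auto.
Qed.

Lemma is_RInt_0_oo_le f g L M :
  is_RInt_0_oo f L -> is_RInt_0_oo g M -> (forall t, 0 < t -> f t <= g t) -> L <= M.
Proof.
  intros Hf Hg Hle. apply Rnot_lt_le; intro Hlt.
  destruct (is_RInt_0_oo_pair f g L M ((L - M) / 2) Hf Hg) as [a0 [Ha0 [b0 H]]]; [lra|].
  set (a := Rmin (a0 / 2) 1). set (b := Rmax b0 1 + 1).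
  assert (0 < a < a0 /\ a <= 1).
  { unfold a. pose proof (Rmin_l (a0 / 2) 1); pose proof (Rmin_r (a0 / 2) 1).
    split; [split; [apply Rmin_glb_lt|]|]; lra. }
  assert (b0 < b /\ 1 < b) by (unfold b; pose proof (Rmax_l b0 1); pose proof (Rmax_r b0 1); lra).
  destruct (H a b) as [E1 [K1 [E2 K2]]]; try lra.
  assert (RInt f a b <= RInt g a b) by (apply RInt_le; auto; [lra | intros; apply Hle; lra]).
  revert K1 K2; unfold Rabs; repeat case Rcase_abs; intros; lra.
Qed.

Lemma is_RInt_0_oo_unique f L M : is_RInt_0_oo f L -> is_RInt_0_oo f M -> L = M.
Proof. intros HL HM; apply Rle_antisym; eapply is_RInt_0_oo_le; eauto; intros; lra. Qed.

Lemma is_RInt_0_oo_Iinf f L : is_RInt_0_oo f L -> Iinf f = L.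
Proof.
  intros H. unfold Iinf.
  assert (Hex : exists L, improper_0_inf f L) by (exists L; apply is_RInt_0_oo_improper; auto).
  apply (is_RInt_0_oo_unique f); auto.
  apply is_RInt_0_oo_improper, (epsilon_spec (inhabits 0) _ Hex).
Qed.

Lemma is_RInt_0_oo_plus f g L M :
  is_RInt_0_oo f L -> is_RInt_0_oo g M -> is_RInt_0_oo (fun t => f t + g t) (L + M).
Proof.
  intros Hf Hg eps He.
  destruct (is_RInt_0_oo_pair f g L M (eps / 2) Hf Hg) as [a0 [Ha0 [b0 H]]]; [lra|].
  exists a0; split; auto; exists b0; intros a b Ha Hb.
  destruct (H a b Ha Hb) as [E1 [H1 [E2 H2]]].
  split; [apply (ex_RInt_plus f g); auto|].
  replace (RInt (fun t => f t + g t) a b) with (RInt f a b + RInt g a b)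
    by (symmetry; exact (RInt_plus f g a b E1 E2)).
  revert H1 H2; unfold Rabs; repeat case Rcase_abs; intros; lra.
Qed.

Lemma is_RInt_0_oo_scal k f L : is_RInt_0_oo f L -> is_RInt_0_oo (fun t => k * f t) (k * L).
Proof.
  intros Hf eps He.
  assert (Hk : 0 <= Rabs k) by apply Rabs_pos.
  destruct (Hf (eps / (Rabs k + 1))) as [a0 [Ha0 [b0 H]]]; [apply Rdiv_lt_0_compat; lra|].
  exists a0; split; auto; exists b0; intros a b Ha Hb.
  destruct (H a b Ha Hb) as [E1 H1].
  split; [apply (ex_RInt_scal f a b k); auto|].
  replace (RInt (fun t => k * f t) a b) with (k * RInt f a b)
    by (symmetry; exact (RInt_scal f a b k E1)).
  replace (k * RInt f a b - k * L) with (k * (RInt f a b - L)) by ring.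
  rewrite Rabs_mult.
  apply Rle_lt_trans with (Rabs k * (eps / (Rabs k + 1))).
  { apply Rmult_le_compat_l; lra. }
  apply Rlt_le_trans with ((Rabs k + 1) * (eps / (Rabs k + 1))).
  { apply Rmult_lt_compat_r; [apply Rdiv_lt_0_compat|]; lra. }
  right; field; lra.
Qed.

Lemma is_RInt_0_oo_ext f g L :
  (forall t, 0 < t -> f t = g t) -> is_RInt_0_oo f L -> is_RInt_0_oo g L.
Proof.
  intros Heq Hf eps He. destruct (Hf eps He) as [a0 [Ha0 [b0 H]]].
  exists (Rmin a0 1); split; [apply Rmin_glb_lt; lra|].
  exists (Rmax b0 1); intros a b Ha Hb.
  pose proof (Rmin_l a0 1); pose proof (Rmin_r a0 1).
  pose proof (Rmax_l b0 1); pose proof (Rmax_r b0 1).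
  destruct (H a b) as [E1 HL]; try lra.
  assert (Hi : forall x, Rmin a b < x < Rmax a b -> f x = g x).
  { intros x Hx. apply Heq. rewrite Rmin_left in Hx; lra. }
  split; [apply (ex_RInt_ext f g); auto | rewrite <- (RInt_ext f g a b Hi); auto].
Qed.

Lemma is_RInt_0_oo_abs_le f g L M :
  is_RInt_0_oo f L -> is_RInt_0_oo g M -> (forall t, 0 < t -> Rabs (f t) <= g t) ->
  Rabs L <= M.
Proof.
  intros Hf Hg H. unfold Rabs at 1. case Rcase_abs; intro.
  - assert (-1 * L <= M); [|lra].
    apply (is_RInt_0_oo_le (fun t => -1 * f t) g); auto; [apply is_RInt_0_oo_scal; auto|].
    intros t Ht. specialize (H t Ht). revert H; unfold Rabs; case Rcase_abs; intros; lra.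
  - apply (is_RInt_0_oo_le f g); auto.
    intros t Ht. specialize (H t Ht). revert H; unfold Rabs; case Rcase_abs; intros; lra.
Qed.

Section PositiveIntegrand.

Variable f : R -> R.
Hypothesis f_cont : forall t, 0 < t -> continuous f t.
Hypothesis f_ge0 : forall t, 0 < t -> 0 <= f t.

Lemma ex_RInt_pos_half_line a b : 0 < a -> a <= b -> ex_RInt f a b.
Proof.
  intros Ha Hab. apply (@ex_RInt_continuous R_CompleteNormedModule).
  intros z Hz. apply f_cont. rewrite Rmin_left in Hz; lra.
Qed.

Lemma RInt_le_RInt_wider a b a' b' :
  0 < a' -> a' <= a -> a <= b -> b <= b' -> RInt f a b <= RInt f a' b'.
Proof.
  intros Ha' Ha Hab Hb.
  assert (E1 := ex_RInt_pos_half_line a' a Ha' Ha).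
  assert (E2 := ex_RInt_pos_half_line a b ltac:(lra) Hab).
  assert (E3 := ex_RInt_pos_half_line b b' ltac:(lra) Hb).
  rewrite <- (RInt_Chasles f a' b b' (ex_RInt_Chasles f _ _ _ E1 E2) E3).
  rewrite <- (RInt_Chasles f a' a b E1 E2).
  assert (0 <= RInt f a' a) by (apply RInt_ge_0; auto; intros; apply f_ge0; lra).
  assert (0 <= RInt f b b') by (apply RInt_ge_0; auto; intros; apply f_ge0; lra).
  unfold plus; simpl; lra.
Qed.

(** The improper integral is the supremum of the integrals over compact subintervals. *)
Lemma is_RInt_0_oo_of_bounded M :
  (forall a b, 0 < a < b -> RInt f a b <= M) -> exists L, is_RInt_0_oo f L.
Proof.
  intros HM.
  set (E := fun v => exists a b, 0 < a < b /\ v = RInt f a b).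
  assert (Hbd : bound E) by (exists M; intros v [a [b [Hab ->]]]; apply HM; auto).
  assert (Hne : exists v, E v) by (exists (RInt f 1 2); exists 1, 2; split; [lra|auto]).
  destruct (completeness E Hbd Hne) as [L [HL1 HL2]].
  exists L. intros eps He.
  assert (exists v, E v /\ L - eps < v) as [v [[a1 [b1 [Hab1 ->]]] Hv]].
  { apply NNPP. intro Hn. assert (L <= L - eps); [|lra].
    apply HL2. intros v Hv. apply Rnot_lt_le. intro. apply Hn. exists v; auto. }
  exists a1; split; [lra|]. exists b1. intros a b Ha Hb.
  split; [apply ex_RInt_pos_half_line; lra|].
  assert (RInt f a1 b1 <= RInt f a b) by (apply RInt_le_RInt_wider; lra).
  assert (RInt f a b <= L) by (apply HL1; exists a, b; split; auto; lra).
  unfold Rabs; case Rcase_abs; intros; lra.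
Qed.

Lemma RInt_le_is_RInt_0_oo L a b : is_RInt_0_oo f L -> 0 < a < b -> RInt f a b <= L.
Proof.
  intros HL Hab. apply Rnot_lt_le; intro Hlt.
  destruct (HL (RInt f a b - L) ltac:(lra)) as [a0 [Ha0 [b0 H]]].
  set (a' := Rmin (a0 / 2) a). set (b' := Rmax b0 b + 1).
  assert (0 < a' < a0 /\ a' <= a).
  { unfold a'. pose proof (Rmin_l (a0 / 2) a); pose proof (Rmin_r (a0 / 2) a).
    split; [split; [apply Rmin_glb_lt|]|]; lra. }
  assert (b0 < b' /\ b < b') by (unfold b'; pose proof (Rmax_l b0 b); pose proof (Rmax_r b0 b); lra).
  destruct (H a' b') as [_ K]; try lra.
  assert (RInt f a b <= RInt f a' b') by (apply RInt_le_RInt_wider; lra).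
  revert K; unfold Rabs; case Rcase_abs; intros; lra.
Qed.

Lemma is_RInt_0_oo_gt_0 L : (forall t, 0 < t -> 0 < f t) -> is_RInt_0_oo f L -> 0 < L.
Proof.
  intros Hp HL.
  assert (RInt f 1 2 <= L) by (apply RInt_le_is_RInt_0_oo; auto; lra).
  assert (0 < RInt f 1 2) by (apply RInt_gt_0; [lra | intros; apply Hp; lra | intros; apply f_cont; lra]).
  lra.
Qed.

(** Domination by [K t^(p-1) / (1 + t^p)^2], whose primitive [- K / (p (1 + t^p))] is bounded. *)
Lemma is_RInt_0_oo_dominated p K : 0 < p ->
  (forall t, 0 < t -> f t <= K * Rpower t (p - 1) / (1 + Rpower t p) ^ 2) ->
  exists L, is_RInt_0_oo f L.
Proof.
  intros Hp Hle.
  set (g := fun t => K * Rpower t (p - 1) / (1 + Rpower t p) ^ 2).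
  set (G := fun t => - (K / p) / (1 + Rpower t p)).
  assert (HK : 0 <= K).
  { specialize (Hle 1 ltac:(lra)). specialize (f_ge0 1 ltac:(lra)).
    unfold Rpower in Hle. rewrite ln_1, !Rmult_0_r, exp_0 in Hle. lra. }
  apply is_RInt_0_oo_of_bounded with (M := K / p).
  intros a b Hab.
  assert (Hder : forall x, Rmin a b <= x <= Rmax a b -> is_derive G x (g x)).
  { intros x Hx. rewrite Rmin_left, Rmax_right in Hx by lra.
    unfold G, g. rewrite Rpower_minus_1 by lra. unfold Rpower. auto_derive.
    - split; [lra|split; auto]. pose proof (exp_pos (p * ln x)); lra.
    - field. split; [lra|]. pose proof (exp_pos (p * ln x)); lra. }
  assert (Hcg : forall x, Rmin a b <= x <= Rmax a b -> continuous g x).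
  { intros x Hx. rewrite Rmin_left, Rmax_right in Hx by lra.
    apply (@ex_derive_continuous R_AbsRing R_NormedModule). unfold g, Rpower. auto_derive.
    split; [lra|split;[lra|split; auto]]. pose proof (exp_pos (p * ln x)).
    intro Hz. assert (1 + exp (p * ln x) > 0) by lra. nra. }
  assert (Hg : RInt g a b = G b - G a) by (apply is_RInt_unique, (is_RInt_derive G g); auto).
  assert (RInt f a b <= RInt g a b).
  { apply RInt_le; [lra | apply ex_RInt_pos_half_line; lra | eexists; apply (is_RInt_derive G g); auto |].
    intros x Hx. apply Hle. lra. }
  pose proof (Rpower_gt_0 a p); pose proof (Rpower_gt_0 b p).
  assert (0 <= K / p) by (apply Rdiv_le_0_compat; lra).
  assert (G b <= 0).
  { unfold G. assert (0 < / (1 + Rpower b p)) by (apply Rinv_0_lt_compat; lra).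
    unfold Rdiv. nra. }
  assert (- G a <= K / p).
  { unfold G. replace (- (- (K / p) / (1 + Rpower a p))) with (K / p * / (1 + Rpower a p)) by (field; lra).
    assert (/ (1 + Rpower a p) <= 1) by (rewrite <- Rinv_1; apply Rinv_le_contravar; lra).
    assert (0 < / (1 + Rpower a p)) by (apply Rinv_0_lt_compat; lra). nra. }
  lra.
Qed.

End PositiveIntegrand.

(** * The integrals J_p and Gamma *)

Lemma exp_le_exp_compat a b : a <= b -> exp a <= exp b.
Proof. intros [H|H]; [left; apply exp_increasing | right; rewrite H]; auto. Qed.

Lemma is_derive_continuity_pt (f : R -> R) x l : is_derive f x l -> continuity_pt f x.
Proof.
  intros H. apply continuity_pt_filterlim.
  apply (@ex_derive_continuous R_AbsRing R_NormedModule). exists l; auto.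
Qed.

Lemma ln_le_sub_1 u : 0 < u -> ln u <= u - 1.
Proof.
  intros Hu. rewrite <- (ln_exp (u - 1)). apply ln_le; auto.
  pose proof (exp_ineq1_le (u - 1)). lra.
Qed.

Lemma Rpower_le_exp_affine t q e : 0 < t -> 0 < q -> 0 < e ->
  Rpower t q <= exp (e * t + q * Rabs (ln (e / q))).
Proof.
  intros Ht Hq He. apply exp_le_exp_compat.
  assert (H1 : ln (e / q * t) <= e / q * t - 1).
  { apply ln_le_sub_1. apply Rmult_lt_0_compat; auto. apply Rdiv_lt_0_compat; auto. }
  rewrite ln_mult in H1; [|apply Rdiv_lt_0_compat; auto|auto].
  assert (H2 : - ln (e / q) <= Rabs (ln (e / q))) by (rewrite <- Rabs_Ropp; apply Rle_abs).
  assert (H3 : q * ln t <= q * (e / q * t - 1 - ln (e / q))) by (apply Rmult_le_compat_l; lra).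
  replace (q * (e / q * t - 1 - ln (e / q))) with (e * t - q - q * ln (e / q)) in H3 by (field; lra).
  assert (H4 : q * - ln (e / q) <= q * Rabs (ln (e / q))) by (apply Rmult_le_compat_l; lra).
  lra.
Qed.

Lemma one_plus_Rpower_sq_le t p e : 0 < t -> 0 < p -> 0 < e ->
  (1 + Rpower t p) ^ 2 <= 4 * exp (2 * e * t + 2 * (p * Rabs (ln (e / p)))).
Proof.
  intros Ht Hp He. pose proof (Rpower_le_exp_affine t p e Ht Hp He) as H.
  set (C := p * Rabs (ln (e / p))) in *.
  assert (0 <= C) by (unfold C; pose proof (Rabs_pos (ln (e / p))); nra).
  assert (1 <= exp (e * t + C)) by (rewrite <- exp_0; apply exp_le_exp_compat; nra).
  replace (2 * e * t + 2 * C) with ((e * t + C) + (e * t + C)) by ring.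
  rewrite exp_plus. pose proof (Rpower_gt_0 t p). nra.
Qed.

Ltac continuous_by_auto_derive :=
  apply (@ex_derive_continuous R_AbsRing R_NormedModule); unfold Rpower; auto_derive;
  repeat split; auto.

Definition pcf_integrand p z t := Rpower t (p - 1) * exp (- t ^ 2 / 2 - z * t).
Definition pcf_int p z := Iinf (pcf_integrand p z).
Definition gamma_integrand s t := Rpower t (s - 1) * exp (- t).

Lemma pcf_integrand_continuous p z t : 0 < t -> continuous (pcf_integrand p z) t.
Proof. intros; unfold pcf_integrand; continuous_by_auto_derive. Qed.

Lemma gamma_integrand_continuous s t : 0 < t -> continuous (gamma_integrand s) t.
Proof. intros; unfold gamma_integrand; continuous_by_auto_derive. Qed.

Lemma pcf_integrand_gt_0 p z t : 0 < pcf_integrand p z t.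
Proof. apply Rmult_lt_0_compat; [apply Rpower_gt_0 | apply exp_pos]. Qed.

Lemma gamma_integrand_gt_0 s t : 0 < gamma_integrand s t.
Proof. apply Rmult_lt_0_compat; [apply Rpower_gt_0 | apply exp_pos]. Qed.

Definition pcf_const p z := 4 * exp (2 * (p * Rabs (ln (1 / p))) + (2 - z) ^ 2 / 2).

Lemma pcf_weight_le p z t : 0 < t -> 0 < p ->
  (1 + Rpower t p) ^ 2 * exp (- t ^ 2 / 2 - z * t) <= pcf_const p z.
Proof.
  intros Ht Hp. pose proof (one_plus_Rpower_sq_le t p 1 Ht Hp ltac:(lra)) as H.
  unfold pcf_const. set (C := p * Rabs (ln (1 / p))) in *.
  apply Rle_trans with (4 * exp (2 * 1 * t + 2 * C) * exp (- t ^ 2 / 2 - z * t)).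
  { apply Rmult_le_compat_r; auto. left; apply exp_pos. }
  rewrite Rmult_assoc, <- exp_plus. apply Rmult_le_compat_l; [lra|].
  apply exp_le_exp_compat. pose proof (pow2_ge_0 (t - (2 - z))). simpl in *. lra.
Qed.

Lemma le_div_one_plus_Rpower_sq t p u K : 0 < t ->
  (1 + Rpower t p) ^ 2 * u <= K -> Rpower t (p - 1) * u <= K * Rpower t (p - 1) / (1 + Rpower t p) ^ 2.
Proof.
  intros Ht Hu. pose proof (Rpower_gt_0 t (p - 1)). pose proof (Rpower_gt_0 t p).
  apply Rmult_le_reg_r with ((1 + Rpower t p) ^ 2); [nra|].
  replace (K * Rpower t (p - 1) / (1 + Rpower t p) ^ 2 * (1 + Rpower t p) ^ 2)
    with (Rpower t (p - 1) * K) by (field; lra).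
  rewrite Rmult_assoc. apply Rmult_le_compat_l; lra.
Qed.

Lemma pcf_integrand_le p z t : 0 < t -> 0 < p ->
  pcf_integrand p z t <= pcf_const p z * Rpower t (p - 1) / (1 + Rpower t p) ^ 2.
Proof. intros Ht Hp. apply le_div_one_plus_Rpower_sq, pcf_weight_le; auto. Qed.

Lemma gamma_integrand_le s t : 0 < t -> 0 < s ->
  gamma_integrand s t <=
  4 * exp (2 * (s * Rabs (ln (/ 4 / s)))) * Rpower t (s - 1) / (1 + Rpower t s) ^ 2.
Proof.
  intros Ht Hs. apply le_div_one_plus_Rpower_sq; auto.
  pose proof (one_plus_Rpower_sq_le t s (/ 4) Ht Hs ltac:(lra)) as H.
  set (C := s * Rabs (ln (/ 4 / s))) in *.
  apply Rle_trans with (4 * exp (2 * / 4 * t + 2 * C) * exp (- t)).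
  { apply Rmult_le_compat_r; auto. left; apply exp_pos. }
  rewrite Rmult_assoc, <- exp_plus. apply Rmult_le_compat_l; [lra|].
  apply exp_le_exp_compat. lra.
Qed.

Lemma pcf_int_correct p z : 0 < p -> is_RInt_0_oo (pcf_integrand p z) (pcf_int p z).
Proof.
  intros Hp.
  assert (Hc : forall t, 0 < t -> continuous (pcf_integrand p z) t) by apply pcf_integrand_continuous.
  assert (H0 : forall t, 0 < t -> 0 <= pcf_integrand p z t) by (intros; left; apply pcf_integrand_gt_0).
  destruct (is_RInt_0_oo_dominated (pcf_integrand p z) Hc H0 p (pcf_const p z) Hp) as [L HL].
  { intros; apply pcf_integrand_le; auto. }
  unfold pcf_int. rewrite (is_RInt_0_oo_Iinf _ L HL). auto.
Qed.

Lemma pcf_int_gt_0 p z : 0 < p -> 0 < pcf_int p z.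
Proof.
  intros Hp. apply (is_RInt_0_oo_gt_0 (pcf_integrand p z)); auto using pcf_int_correct.
  - intros; apply pcf_integrand_continuous; auto.
  - intros; left; apply pcf_integrand_gt_0.
  - intros; apply pcf_integrand_gt_0.
Qed.

Lemma Gamma_gt_0 s : 0 < s -> 0 < Gamma s.
Proof.
  intros Hs.
  assert (Hc : forall t, 0 < t -> continuous (gamma_integrand s) t) by apply gamma_integrand_continuous.
  assert (Hp : forall t, 0 < t -> 0 <= gamma_integrand s t) by (intros; left; apply gamma_integrand_gt_0).
  destruct (is_RInt_0_oo_dominated (gamma_integrand s) Hc Hp s (4 * exp (2 * (s * Rabs (ln (/ 4 / s))))) Hs) as [L HL].
  { intros; apply gamma_integrand_le; auto. }
  unfold Gamma. fold (gamma_integrand s). rewrite (is_RInt_0_oo_Iinf _ L HL).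
  apply (is_RInt_0_oo_gt_0 (gamma_integrand s)); auto. intros; apply gamma_integrand_gt_0.
Qed.

Lemma Rabs_le_between_0 c u : Rmin 0 u <= c <= Rmax 0 u -> Rabs c <= Rabs u.
Proof.
  intros [H1 H2]. unfold Rmin, Rmax in *. destruct (Rle_dec 0 u);
  unfold Rabs; repeat case Rcase_abs; intros; lra.
Qed.

Lemma exp_taylor1_le u : Rabs (exp u - 1 - u) <= u ^ 2 * exp (Rabs u).
Proof.
  destruct (MVT_gen (fun v => exp v - 1 - v) 0 u (fun v => exp v - 1)) as [c [Hc Hf]].
  { intros x _. auto_derive; auto. ring. }
  { intros x _. eapply is_derive_continuity_pt. auto_derive; auto. }
  destruct (MVT_gen exp 0 c exp) as [d [Hd He]].
  { intros x _. apply is_derive_exp. }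
  { intros x _. eapply is_derive_continuity_pt. apply is_derive_exp. }
  replace (exp u - 1 - u) with (exp u - 1 - u - (exp 0 - 1 - 0)) by (rewrite exp_0; ring).
  rewrite exp_0 in *. rewrite Hf, He.
  replace (exp d * (c - 0) * (u - 0)) with (exp d * (c * u)) by ring.
  rewrite !Rabs_mult, (Rabs_right (exp d)) by (left; apply exp_pos).
  pose proof (Rabs_le_between_0 c u Hc). pose proof (Rabs_le_between_0 d c Hd).
  assert (exp d <= exp (Rabs u)) by (apply exp_le_exp_compat; pose proof (Rle_abs d); lra).
  assert (Rabs c * Rabs u <= u ^ 2).
  { replace (u ^ 2) with (Rabs u * Rabs u).
    - apply Rmult_le_compat_r; auto. apply Rabs_pos.
    - rewrite <- Rabs_mult, Rabs_right; simpl; nra. }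
  pose proof (Rabs_pos c). pose proof (Rabs_pos u). pose proof (exp_pos d).
  rewrite (Rmult_comm (u ^ 2)). apply Rmult_le_compat; auto; [left; auto | apply Rmult_le_pos; auto].
Qed.

Lemma pcf_integrand_shift p z h t : pcf_integrand p (z + h) t = pcf_integrand p z t * exp (- h * t).
Proof. unfold pcf_integrand. rewrite Rmult_assoc, <- exp_plus. do 2 f_equal. ring. Qed.

Lemma pcf_integrand_succ p z t : 0 < t -> pcf_integrand (p + 1) z t = t * pcf_integrand p z t.
Proof.
  intros Ht. unfold pcf_integrand. replace (p + 1 - 1) with ((p - 1) + 1) by ring.
  rewrite Rpower_plus_1; auto. ring.
Qed.

Lemma pcf_integrand_succ2_shift p z t : 0 < t ->
  pcf_integrand (p + 2) (z - 1) t = t ^ 2 * pcf_integrand p z t * exp t.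
Proof.
  intros Ht. unfold pcf_integrand. replace (p + 2 - 1) with ((p - 1) + 1 + 1) by ring.
  rewrite !Rpower_plus_1; auto.
  replace (- t ^ 2 / 2 - (z - 1) * t) with ((- t ^ 2 / 2 - z * t) + t) by ring.
  rewrite exp_plus. ring.
Qed.

(** [|e^(-ht) - 1 + ht| <= h^2 t^2 e^t] for [|h| <= 1] dominates the remainder by [J_(p+2) (z-1)]. *)
Lemma pcf_int_diff_quotient_le p z h : 0 < p -> h <> 0 -> Rabs h <= 1 ->
  Rabs ((pcf_int p (z + h) - pcf_int p z) / h - - pcf_int (p + 1) z)
  <= Rabs h * pcf_int (p + 2) (z - 1).
Proof.
  intros Hp Hh Hh1.
  assert (Hq : is_RInt_0_oo
     (fun t => / h * pcf_integrand p (z + h) t + (- / h * pcf_integrand p z t + 1 * pcf_integrand (p + 1) z t))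
     (/ h * pcf_int p (z + h) + (- / h * pcf_int p z + 1 * pcf_int (p + 1) z))).
  { apply is_RInt_0_oo_plus; [apply is_RInt_0_oo_scal, pcf_int_correct; auto|].
    apply is_RInt_0_oo_plus; apply is_RInt_0_oo_scal, pcf_int_correct; lra. }
  assert (Hr : is_RInt_0_oo (fun t => Rabs h * pcf_integrand (p + 2) (z - 1) t)
                 (Rabs h * pcf_int (p + 2) (z - 1))).
  { apply is_RInt_0_oo_scal, pcf_int_correct; lra. }
  replace ((pcf_int p (z + h) - pcf_int p z) / h - - pcf_int (p + 1) z) with
    (/ h * pcf_int p (z + h) + (- / h * pcf_int p z + 1 * pcf_int (p + 1) z)) by (field; auto).
  apply (is_RInt_0_oo_abs_le _ _ _ _ Hq Hr). intros t Ht.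
  rewrite pcf_integrand_shift, pcf_integrand_succ, pcf_integrand_succ2_shift; auto.
  set (g := pcf_integrand p z t). assert (G0 : 0 < g) by apply pcf_integrand_gt_0.
  replace (/ h * (g * exp (- h * t)) + (- / h * g + 1 * (t * g))) with
    (g * / h * (exp (- h * t) - 1 - (- h * t))) by (field; auto).
  rewrite !Rabs_mult, (Rabs_right g), Rabs_inv by lra.
  pose proof (exp_taylor1_le (- h * t)) as T1.
  assert (A0 : 0 < Rabs h) by (apply Rabs_pos_lt; auto).
  assert (A1 : exp (Rabs (- h * t)) <= exp t).
  { apply exp_le_exp_compat. rewrite Rabs_mult, Rabs_Ropp, (Rabs_right t) by lra. nra. }
  assert (A2 : (- h * t) ^ 2 = Rabs h * Rabs h * t ^ 2).
  { simpl. rewrite <- Rabs_mult, Rabs_right by nra. ring. }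
  rewrite A2 in T1.
  apply Rle_trans with (g * / Rabs h * (Rabs h * Rabs h * t ^ 2 * exp t)).
  - apply Rmult_le_compat_l; [apply Rmult_le_pos; [lra | left; apply Rinv_0_lt_compat; auto]|].
    eapply Rle_trans; [apply T1|].
    apply Rmult_le_compat_l; [apply Rmult_le_pos; [nra | apply pow2_ge_0] | auto].
  - right. field. lra.
Qed.

Lemma pcf_int_derive p z : 0 < p -> derivable_pt_lim (pcf_int p) z (- pcf_int (p + 1) z).
Proof.
  intros Hp eps He.
  pose proof (pcf_int_gt_0 (p + 2) (z - 1) ltac:(lra)) as HJ.
  set (M := pcf_int (p + 2) (z - 1)) in *.
  assert (Hd0 : 0 < Rmin 1 (eps / (M + 1))) by (apply Rmin_glb_lt; [lra | apply Rdiv_lt_0_compat; lra]).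
  exists (mkposreal _ Hd0). intros h Hh Hd. simpl in Hd.
  pose proof (Rmin_l 1 (eps / (M + 1))); pose proof (Rmin_r 1 (eps / (M + 1))).
  eapply Rle_lt_trans; [apply pcf_int_diff_quotient_le; auto; lra|].
  apply Rle_lt_trans with (eps / (M + 1) * M); [apply Rmult_le_compat_r; lra|].
  apply Rlt_le_trans with (eps / (M + 1) * (M + 1)).
  - apply Rmult_lt_compat_l; [apply Rdiv_lt_0_compat|]; lra.
  - right; field; lra.
Qed.

(** Integration by parts: [t^p e^(-t^2/2 - z t)] vanishes at both ends of (0, +oo). *)
Definition pcf_boundary_term p z t := Rpower t p * exp (- t ^ 2 / 2 - z * t).

Lemma pcf_boundary_term_derive p z t : 0 < t ->
  is_derive (pcf_boundary_term p z) t
    (p * pcf_integrand p z t - pcf_integrand (p + 2) z t - z * pcf_integrand (p + 1) z t).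
Proof.
  intros Ht. unfold pcf_integrand, pcf_boundary_term.
  replace (p + 1 - 1) with p by ring. replace (p + 2 - 1) with (p + 1) by ring.
  rewrite Rpower_minus_1, Rpower_plus_1 by auto. unfold Rpower. auto_derive; auto.
  replace (- (t * (t * 1)) * / 2 + - (z * t)) with (- t ^ 2 / 2 - z * t) by (simpl; field).
  field. lra.
Qed.

Lemma pcf_boundary_term_bounds p z t : 0 < p -> 0 < t ->
  0 < pcf_boundary_term p z t /\ pcf_boundary_term p z t <= pcf_const p z * Rpower t p /\
  pcf_boundary_term p z t <= pcf_const p z / Rpower t p.
Proof.
  intros Hp Ht. pose proof (pcf_weight_le p z t Ht Hp) as C.
  pose proof (Rpower_gt_0 t p) as R0. pose proof (exp_pos (- t ^ 2 / 2 - z * t)) as E0.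
  unfold pcf_boundary_term.
  set (E := exp (- t ^ 2 / 2 - z * t)) in *. set (P := Rpower t p) in *. set (K := pcf_const p z) in *.
  assert (HE : E <= K / (1 + P) ^ 2).
  { apply Rmult_le_reg_r with ((1 + P) ^ 2); [nra|].
    unfold Rdiv. rewrite Rmult_assoc, Rinv_l by (apply pow_nonzero; lra). lra. }
  assert (0 <= K) by nra.
  split; [apply Rmult_lt_0_compat; auto|].
  split; apply Rle_trans with (P * (K / (1 + P) ^ 2)); try (apply Rmult_le_compat_l; lra).
  - apply Rle_trans with (P * (K / 1)); [|right; field].
    apply Rmult_le_compat_l; [lra|]. unfold Rdiv. apply Rmult_le_compat_l; auto.
    apply Rinv_le_contravar; nra.
  - apply Rle_trans with (P * (K / (P * P))); [|right; field; lra].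
    apply Rmult_le_compat_l; [lra|]. unfold Rdiv. apply Rmult_le_compat_l; auto.
    apply Rinv_le_contravar; nra.
Qed.

Lemma Rpower_root_lt p d a : 0 < p -> 0 < d -> 0 < a < Rpower d (/ p) -> Rpower a p < d.
Proof.
  intros Hp Hd Ha.
  assert (E : Rpower (Rpower d (/ p)) p = d) by (rewrite Rpower_mult, Rinv_l, Rpower_1; auto; lra).
  rewrite <- E at 1. apply Rlt_Rpower_l; auto.
Qed.

Lemma Rpower_root_gt p d b : 0 < p -> 0 < d -> Rpower d (/ p) < b -> d < Rpower b p.
Proof.
  intros Hp Hd Hb.
  assert (E : Rpower (Rpower d (/ p)) p = d) by (rewrite Rpower_mult, Rinv_l, Rpower_1; auto; lra).
  rewrite <- E at 1. apply Rlt_Rpower_l; auto. split; auto. apply Rpower_gt_0.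
Qed.

Lemma is_RInt_0_oo_pcf_boundary_term_derive p z : 0 < p ->
  is_RInt_0_oo (fun t => p * pcf_integrand p z t - pcf_integrand (p + 2) z t
                         - z * pcf_integrand (p + 1) z t) 0.
Proof.
  intros Hp eps He.
  set (K := pcf_const p z).
  assert (HK : 0 < K) by (unfold K, pcf_const; pose proof (exp_pos (2 * (p * Rabs (ln (1 / p))) + (2 - z) ^ 2 / 2)); lra).
  set (d := eps / 2 / (K + 1)). assert (Hd : 0 < d) by (unfold d; apply Rdiv_lt_0_compat; lra).
  exists (Rmin 1 (Rpower d (/ p))). split; [apply Rmin_glb_lt; [lra | apply Rpower_gt_0]|].
  exists (Rmax 1 (Rpower (/ d) (/ p))). intros a b Ha Hb.
  pose proof (Rmin_l 1 (Rpower d (/ p))). pose proof (Rmin_r 1 (Rpower d (/ p))).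
  pose proof (Rmax_l 1 (Rpower (/ d) (/ p))). pose proof (Rmax_r 1 (Rpower (/ d) (/ p))).
  set (f := fun t => p * pcf_integrand p z t - pcf_integrand (p + 2) z t - z * pcf_integrand (p + 1) z t).
  assert (HI : is_RInt f a b (minus (pcf_boundary_term p z b) (pcf_boundary_term p z a))).
  { apply (is_RInt_derive (pcf_boundary_term p z) f); intros x Hx;
      rewrite Rmin_left, Rmax_right in Hx by lra.
    - apply pcf_boundary_term_derive; lra.
    - unfold f, pcf_integrand; continuous_by_auto_derive; lra. }
  split; [eexists; eauto|].
  rewrite (is_RInt_unique _ _ _ _ HI). unfold minus, plus, opp; simpl.
  destruct (pcf_boundary_term_bounds p z a Hp ltac:(lra)) as [A1 [A2 _]].
  destruct (pcf_boundary_term_bounds p z b Hp ltac:(lra)) as [B1 [_ B3]].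
  assert (Rpower a p < d) by (apply Rpower_root_lt; auto; lra).
  assert (/ d < Rpower b p) by (apply Rpower_root_gt; auto; [apply Rinv_0_lt_compat; auto | lra]).
  assert (K * Rpower a p <= K * d) by (apply Rmult_le_compat_l; lra).
  assert (K / Rpower b p <= K * d).
  { unfold Rdiv. apply Rmult_le_compat_l; [lra|]. replace d with (/ / d) by (field; lra).
    apply Rinv_le_contravar; [apply Rinv_0_lt_compat; auto | lra]. }
  assert (K * d < eps / 2).
  { unfold d. apply Rlt_le_trans with ((K + 1) * (eps / 2 / (K + 1))).
    - apply Rmult_lt_compat_r; [apply Rdiv_lt_0_compat|]; lra.
    - right; field; lra. }
  fold K in A2, B3. rewrite Rminus_0_r. unfold Rabs; case Rcase_abs; intros; lra.
Qed.

Lemma pcf_int_recurrence p z : 0 < p ->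
  pcf_int (p + 2) z + z * pcf_int (p + 1) z = p * pcf_int p z.
Proof.
  intros Hp.
  assert (H1 : is_RInt_0_oo
    (fun t => p * pcf_integrand p z t + (-1 * pcf_integrand (p + 2) z t + - z * pcf_integrand (p + 1) z t))
    (p * pcf_int p z + (-1 * pcf_int (p + 2) z + - z * pcf_int (p + 1) z))).
  { apply is_RInt_0_oo_plus; [apply is_RInt_0_oo_scal, pcf_int_correct; auto|].
    apply is_RInt_0_oo_plus; apply is_RInt_0_oo_scal, pcf_int_correct; lra. }
  apply (is_RInt_0_oo_ext _ (fun t => p * pcf_integrand p z t - pcf_integrand (p + 2) z t
                                      - z * pcf_integrand (p + 1) z t)) in H1; [|intros; ring].
  pose proof (is_RInt_0_oo_unique _ _ _ H1 (is_RInt_0_oo_pcf_boundary_term_derive p z Hp)). lra.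
Qed.

(** * The function psi_lambda *)

Section PsiRepresentation.

Variables theta sigma mu lam : R.
Hypothesis Htheta : 0 < theta.
Hypothesis Hsigma : 0 < sigma.
Hypothesis Hlam : 0 < lam.

Let s := lam / theta.
Let k := sqrt (2 * theta) / sigma.

Let s_gt_0 : 0 < s.
Proof. apply Rdiv_lt_0_compat; auto. Qed.

Let k_gt_0 : 0 < k.
Proof. apply Rdiv_lt_0_compat; auto. apply sqrt_lt_R0; lra. Qed.

Let k_sqr : k * k = 2 * theta / sigma ^ 2.
Proof.
  unfold k. replace (sqrt (2 * theta) / sigma * (sqrt (2 * theta) / sigma)) with
    (sqrt (2 * theta) * sqrt (2 * theta) / sigma ^ 2) by (field; lra).
  rewrite sqrt_sqrt; lra.
Qed.

Let Gamma_s_gt_0 : 0 < Gamma s.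
Proof. apply Gamma_gt_0, s_gt_0. Qed.

(** The [n]-th derivative of [psi] is [k^n J_(s+n) (k (mu - x)) / Gamma s]. *)
Definition dnpsi (n : nat) x := k ^ n * pcf_int (s + INR n) (k * (mu - x)) / Gamma s.

Lemma psi_dnpsi x : psi theta sigma mu lam x = dnpsi 0 x.
Proof.
  unfold psi, Dpc, dnpsi, pcf_int. simpl INR. rewrite Rplus_0_r, pow_O, Rmult_1_l.
  replace (- (- lam / theta)) with s by (unfold s; field; lra).
  replace (- (x - mu) * sqrt (2 * theta) / sigma) with (k * (mu - x)) by (unfold k; field; lra).
  fold (pcf_integrand s (k * (mu - x))).
  assert (HG := Gamma_s_gt_0).
  replace (exp (theta * (x - mu) ^ 2 / (2 * sigma ^ 2)) * (exp (- (k * (mu - x)) ^ 2 / 4) / Gamma s *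
     Iinf (pcf_integrand s (k * (mu - x))))) with
    (exp (theta * (x - mu) ^ 2 / (2 * sigma ^ 2) + - (k * (mu - x)) ^ 2 / 4)
     * Iinf (pcf_integrand s (k * (mu - x))) / Gamma s) by (rewrite exp_plus; field; lra).
  replace (theta * (x - mu) ^ 2 / (2 * sigma ^ 2) + - (k * (mu - x)) ^ 2 / 4) with 0.
  - rewrite exp_0. field. lra.
  - replace ((k * (mu - x)) ^ 2) with (k * k * (mu - x) ^ 2) by ring. rewrite k_sqr. field. lra.
Qed.

Lemma dnpsi_derive n x : derivable_pt_lim (dnpsi n) x (dnpsi (S n) x).
Proof.
  pose proof Gamma_s_gt_0. pose proof k_gt_0.
  set (p := s + INR n). assert (Hp : 0 < p) by (pose proof (pos_INR n); pose proof s_gt_0; unfold p; lra).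
  replace (dnpsi n) with (fun y => k ^ n / Gamma s * pcf_int p (k * (mu - y)))
    by (apply functional_extensionality; intro; unfold dnpsi, p; field; lra).
  unfold dnpsi. rewrite S_INR. replace (s + (INR n + 1)) with (p + 1) by (unfold p; ring).
  replace (k ^ S n * pcf_int (p + 1) (k * (mu - x)) / Gamma s)
    with (k ^ n / Gamma s * (- pcf_int (p + 1) (k * (mu - x)) * - k)) by (simpl; field; lra).
  apply derivable_pt_lim_scal.
  apply (derivable_pt_lim_comp (fun y => k * (mu - y)) (pcf_int p)).
  - apply is_derive_Reals. auto_derive; auto. ring.
  - apply pcf_int_derive; auto.
Qed.

Lemma dnpsi_gt_0 n x : 0 < dnpsi n x.
Proof.
  pose proof Gamma_s_gt_0. pose proof k_gt_0. pose proof (pos_INR n). pose proof s_gt_0.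
  apply Rdiv_lt_0_compat; auto. apply Rmult_lt_0_compat; [apply pow_lt; auto | apply pcf_int_gt_0; lra].
Qed.

Lemma dnpsi_ode x :
  / 2 * sigma ^ 2 * dnpsi 2 x + theta * (mu - x) * dnpsi 1 x = lam * dnpsi 0 x.
Proof.
  pose proof Gamma_s_gt_0. unfold dnpsi; simpl INR.
  pose proof (pcf_int_recurrence s (k * (mu - x)) s_gt_0) as Hrec.
  replace (s + (1 + 1)) with (s + 2) by ring. rewrite Rplus_0_r.
  set (z := k * (mu - x)) in *.
  transitivity (theta * (pcf_int (s + 2) z + z * pcf_int (s + 1) z) / Gamma s).
  - unfold z. replace (k ^ 2) with (2 * theta / sigma ^ 2) by (rewrite <- k_sqr; ring).
    simpl pow. field; repeat split; lra.
  - rewrite Hrec. unfold s in *. field; repeat split; lra.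
Qed.

End PsiRepresentation.

(** * One-variable calculus *)

Lemma Rabs_sub_lt_lt x y z : x < z -> Rabs (y - x) < z - x -> y < z.
Proof. unfold Rabs; case Rcase_abs; intros; lra. Qed.

Lemma Rabs_sub_lt_gt x y z : z < x -> Rabs (y - x) < x - z -> z < y.
Proof. unfold Rabs; case Rcase_abs; intros; lra. Qed.

Lemma Rabs_mult_le u v U V : Rabs u <= U -> Rabs v <= V -> Rabs (u * v) <= U * V.
Proof. intros; rewrite Rabs_mult; apply Rmult_le_compat; auto; apply Rabs_pos. Qed.

Lemma derivable_pt_lim_continuity_pt f x l : derivable_pt_lim f x l -> continuity_pt f x.
Proof. intros H. apply derivable_continuous_pt. exists l. auto. Qed.

Lemma Deriv_unique f x l : derivable_pt_lim f x l -> Deriv f x = l.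
Proof.
  intros H. unfold Deriv.
  assert (Hex : exists l, derivable_pt_lim f x l) by (exists l; auto).
  eapply uniqueness_limite; eauto. apply (epsilon_spec (inhabits 0) _ Hex).
Qed.

Lemma Derive_of_is_derive (f : R -> R) x l : is_derive f x l -> Derive (fun y : R => f y) x = l.
Proof. apply is_derive_unique. Qed.

Lemma is_derive_pos_lt (f df : R -> R) a b :
  (forall x, a <= x <= b -> is_derive f x (df x)) -> (forall x, a <= x <= b -> 0 < df x) ->
  a < b -> f a < f b.
Proof.
  intros Hd Hp Hab.
  destruct (MVT_gen f a b df) as [c [Hc E]]; rewrite ?Rmin_left, ?Rmax_right in * by lra.
  - intros x Hx; apply Hd; lra.
  - intros x Hx; eapply is_derive_continuity_pt; apply Hd; lra.
  - assert (0 < df c) by (apply Hp; lra). nra.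
Qed.

Lemma continuity_pt_bounded f a b : (forall x, a <= x <= b -> continuity_pt f x) ->
  exists M, forall x, a <= x <= b -> Rabs (f x) <= M.
Proof.
  intros H. destruct (Rle_dec a b) as [Hab|Hab].
  - destruct (continuity_ab_maj (fun x => Rabs (f x)) a b Hab) as [m [Hm _]].
    + intros c Hc. apply (continuity_pt_comp f Rabs); auto. apply Rcontinuity_abs.
    + exists (Rabs (f m)). auto.
  - exists 0. intros; lra.
Qed.

Lemma limit1_in_continuity_pt (D : R -> Prop) f x : continuity_pt f x -> limit1_in f D (f x) x.
Proof.
  intros H eps Heps. destruct (H eps Heps) as [a [Ha Hx]]. exists a. split; auto.
  intros y [Dy Hy]. destruct (Req_dec y x) as [->|Hne].
  - simpl. unfold R_dist. rewrite Rminus_diag, Rabs_R0; lra.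
  - apply Hx. repeat split; auto.
Qed.

Lemma derivable_pt_lim_locally_eq (f g : R -> R) x l :
  (exists d, 0 < d /\ forall y, Rabs (y - x) < d -> f y = g y) ->
  derivable_pt_lim g x l -> derivable_pt_lim f x l.
Proof.
  intros [d [Hd He]] Hg eps Heps. destruct (Hg eps Heps) as [del Hdel].
  assert (H0 : 0 < Rmin d del) by (apply Rmin_glb_lt; auto; apply cond_pos).
  exists (mkposreal _ H0). intros h Hh Hhd. simpl in Hhd.
  pose proof (Rmin_l d del); pose proof (Rmin_r d del).
  rewrite (He (x + h)), (He x); [apply Hdel; auto; lra | rewrite Rminus_diag, Rabs_R0; auto |].
  replace (x + h - x) with h by ring. lra.
Qed.

Lemma derivable_pt_lim_piecewise (f g1 g2 : R -> R) x l :
  (forall y, f y = g1 y \/ f y = g2 y) -> f x = g1 x -> f x = g2 x ->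
  derivable_pt_lim g1 x l -> derivable_pt_lim g2 x l -> derivable_pt_lim f x l.
Proof.
  intros Hf E1 E2 H1 H2 eps Heps.
  destruct (H1 eps Heps) as [d1 Hd1]. destruct (H2 eps Heps) as [d2 Hd2].
  assert (H0 : 0 < Rmin d1 d2) by (apply Rmin_glb_lt; apply cond_pos).
  exists (mkposreal _ H0). intros h Hh Hhd. simpl in Hhd.
  pose proof (Rmin_l d1 d2). pose proof (Rmin_r d1 d2).
  destruct (Hf (x + h)) as [E|E]; rewrite E; [rewrite E1; apply Hd1 | rewrite E2; apply Hd2]; auto; lra.
Qed.

Lemma deriv_within_of_derivable (D : R -> Prop) f x l :
  derivable_pt_lim f x l -> deriv_within D f x l.
Proof.
  intros H eps Heps. destruct (H eps Heps) as [d Hd].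
  exists d. split; [apply cond_pos|]. intros y [[_ Hy] Hyd].
  simpl in *. unfold R_dist in *.
  replace y with (x + (y - x)) at 1 by ring. apply Hd; lra.
Qed.

Lemma deriv_within_locally_eq (D : R -> Prop) f g x l :
  (exists d, 0 < d /\ forall y, D y -> Rabs (y - x) < d -> f y = g y) -> D x ->
  deriv_within D g x l -> deriv_within D f x l.
Proof.
  intros [d [Hd He]] Dx H eps Heps. destruct (H eps Heps) as [a [Ha Hy]].
  exists (Rmin a d). split; [apply Rmin_glb_lt; lra|].
  intros y [[Dy Hne] Hyd]. simpl in Hyd. unfold R_dist in Hyd.
  pose proof (Rmin_l a d). pose proof (Rmin_r a d).
  rewrite (He y Dy), (He x Dx) by (rewrite ?Rminus_diag, ?Rabs_R0; lra).
  apply Hy. repeat split; auto. simpl. unfold R_dist. lra.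
Qed.

Lemma deriv_within_piecewise (D : R -> Prop) f g1 g2 x l :
  (forall y, D y -> f y = g1 y \/ f y = g2 y) -> f x = g1 x -> f x = g2 x ->
  deriv_within D g1 x l -> deriv_within D g2 x l -> deriv_within D f x l.
Proof.
  intros Hf E1 E2 H1 H2 eps Heps.
  destruct (H1 eps Heps) as [a1 [Ha1 Hy1]]. destruct (H2 eps Heps) as [a2 [Ha2 Hy2]].
  exists (Rmin a1 a2). split; [apply Rmin_glb_lt; lra|].
  intros y [[Dy Hne] Hyd]. simpl in Hyd. unfold R_dist in Hyd.
  pose proof (Rmin_l a1 a2). pose proof (Rmin_r a1 a2).
  destruct (Hf y Dy) as [E|E]; rewrite E; [rewrite E1; apply Hy1 | rewrite E2; apply Hy2];
    repeat split; auto; simpl; unfold R_dist; lra.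
Qed.

(** * The free boundary data x0bar *)

Section FreeBoundaryProblem.

Variables theta mu lam : R.
Variables Phi dPhi : R -> R.
Hypothesis Htheta : 0 < theta.
Hypothesis Hmu : 0 < mu.
Hypothesis Hlam : 0 < lam.
Hypothesis HdPhi : forall x, derivable_pt_lim Phi x (dPhi x).
Hypothesis Hconv : forall x y t, x < y -> 0 < t < 1 ->
  Phi (t * x + (1 - t) * y) < t * Phi x + (1 - t) * Phi y.
Hypothesis HPhi1 : Phi 1 = 0.
Hypothesis Hk : forall c, 0 <= c <= 1 -> kfun theta lam dPhi c < 0.

Lemma Phi_tangent_le c y : c < y -> dPhi c * (y - c) <= Phi y - Phi c.
Proof.
  intros Hcy. apply Rnot_lt_le. intro Hlt.
  set (q := (Phi y - Phi c) / (y - c)).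
  assert (Hq : q < dPhi c).
  { unfold q. apply Rmult_lt_reg_r with (y - c); [lra|].
    unfold Rdiv; rewrite Rmult_assoc, Rinv_l; lra. }
  destruct (HdPhi c (dPhi c - q) ltac:(lra)) as [d Hd].
  set (u := Rmin (/ 2) (d / 2 / (y - c))).
  assert (Hu : 0 < u < 1).
  { unfold u. pose proof (Rmin_l (/ 2) (d / 2 / (y - c))). pose proof (cond_pos d).
    split; [apply Rmin_glb_lt; [lra | apply Rdiv_lt_0_compat; lra] | lra]. }
  set (h := u * (y - c)).
  assert (Hh0 : 0 < h) by (unfold h; nra).
  assert (Hhd : h < d).
  { unfold h. assert (u <= d / 2 / (y - c)) by apply Rmin_r.
    apply Rle_lt_trans with (d / 2 / (y - c) * (y - c)); [apply Rmult_le_compat_r; lra|].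
    replace (d / 2 / (y - c) * (y - c)) with (d / 2) by (field; lra). pose proof (cond_pos d); lra. }
  specialize (Hd h ltac:(lra) ltac:(rewrite Rabs_right; lra)).
  assert (Hc : Phi (c + h) < Phi c + u * (Phi y - Phi c)).
  { pose proof (Hconv c y (1 - u) Hcy ltac:(lra)) as Hcv.
    replace ((1 - u) * c + (1 - (1 - u)) * y) with (c + h) in Hcv by (unfold h; ring). lra. }
  assert ((Phi (c + h) - Phi c) / h < q).
  { unfold q. apply Rmult_lt_reg_r with h; auto. unfold Rdiv. rewrite Rmult_assoc, Rinv_l by lra.
    replace ((Phi y - Phi c) * / (y - c) * h) with (u * (Phi y - Phi c)) by (unfold h; field; lra).
    lra. }
  revert Hd. unfold Rabs. case Rcase_abs; intros; lra.
Qed.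

Lemma Phi_tangent_at_1_lt_0 c : c < 1 -> Phi c + dPhi c * (1 - c) < 0.
Proof.
  intros Hc. set (m := (c + 1) / 2).
  pose proof (Phi_tangent_le c m ltac:(unfold m; lra)) as Ht.
  pose proof (Hconv c 1 (/ 2) Hc ltac:(lra)) as Hcv.
  replace (/ 2 * c + (1 - / 2) * 1) with m in Hcv by (unfold m; field).
  rewrite HPhi1 in Hcv. unfold m in *.
  replace ((c + 1) / 2 - c) with ((1 - c) / 2) in Ht by field. lra.
Qed.

Lemma zeta_derive c : is_derive (zeta theta lam Phi) c (- kfun theta lam dPhi c).
Proof.
  pose proof (proj2 (is_derive_Reals _ _ _) (HdPhi c)) as HP.
  unfold zeta, kfun. auto_derive; [exists (dPhi c); auto|].
  rewrite (Derive_of_is_derive Phi c (dPhi c) HP). ring.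
Qed.

Lemma zeta_lt_0 c : I01 c -> zeta theta lam Phi c < 0.
Proof.
  intros Hc. assert (zeta theta lam Phi 1 = 0) by (unfold zeta; rewrite HPhi1; ring).
  assert (zeta theta lam Phi c < zeta theta lam Phi 1); [|lra].
  apply (is_derive_pos_lt _ (fun c => - kfun theta lam dPhi c)); [| |unfold I01 in Hc; lra].
  - intros; apply zeta_derive.
  - intros x Hx. pose proof (Hk x ltac:(unfold I01 in Hc; lra)). lra.
Qed.

Definition dx0bar c :=
  theta * mu * (dPhi c * zeta theta lam Phi c + kfun theta lam dPhi c * Phi c)
  / (zeta theta lam Phi c) ^ 2.

Lemma x0bar_derive c : I01 c -> is_derive (x0bar theta mu lam Phi) c (dx0bar c).
Proof.
  intros Hc. pose proof (zeta_lt_0 c Hc). unfold x0bar, dx0bar.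
  assert (E1 : is_derive Phi c (dPhi c)) by (apply is_derive_Reals; auto).
  assert (E2 := zeta_derive c).
  auto_derive; [repeat split; try (eexists; eauto); lra|].
  rewrite (Derive_of_is_derive Phi c (dPhi c) E1), (Derive_of_is_derive (zeta theta lam Phi) c _ E2).
  field. lra.
Qed.

Lemma dx0bar_lt_0 c : I01 c -> dx0bar c < 0.
Proof.
  intros Hc. unfold dx0bar.
  assert (E : dPhi c * zeta theta lam Phi c + kfun theta lam dPhi c * Phi c =
     (lam + theta) * (Phi c + dPhi c * (1 - c))) by (unfold zeta, kfun; ring).
  rewrite E. pose proof (Phi_tangent_at_1_lt_0 c ltac:(unfold I01 in Hc; lra)).
  pose proof (zeta_lt_0 c Hc).
  apply Rmult_lt_reg_r with ((zeta theta lam Phi c) ^ 2); [nra|].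
  unfold Rdiv. rewrite Rmult_assoc, Rinv_l, Rmult_0_l by (apply pow_nonzero; lra).
  assert (0 < theta * mu) by nra.
  assert ((lam + theta) * (Phi c + dPhi c * (1 - c)) < 0) by nra. nra.
Qed.

Lemma x0bar_decreasing c1 c2 : I01 c1 -> I01 c2 -> c1 < c2 ->
  x0bar theta mu lam Phi c2 < x0bar theta mu lam Phi c1.
Proof.
  intros H1 H2 H12.
  assert (- x0bar theta mu lam Phi c1 < - x0bar theta mu lam Phi c2); [|lra].
  apply (is_derive_pos_lt (fun c => - x0bar theta mu lam Phi c) (fun c => - dx0bar c)); auto.
  - intros x Hx. apply (is_derive_opp (x0bar theta mu lam Phi) x), x0bar_derive.
    unfold I01 in *; lra.
  - intros x Hx. pose proof (dx0bar_lt_0 x ltac:(unfold I01 in *; lra)). lra.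
Qed.


(** * The free boundary gamma and the function W *)

Section ValueFunction.

Variable sigma : R.
Hypothesis Hsigma : 0 < sigma.
Variables ps ps1 ps2 : R -> R.
Hypothesis Hd0 : forall x, is_derive ps x (ps1 x).
Hypothesis Hd1 : forall x, is_derive ps1 x (ps2 x).
Hypothesis Hc2 : forall x, continuity_pt ps2 x.
Hypothesis Hpos : forall x, 0 < ps x /\ 0 < ps1 x /\ 0 < ps2 x.
Hypothesis Hode : forall x, / 2 * sigma ^ 2 * ps2 x + theta * (mu - x) * ps1 x = lam * ps x.

Lemma ps_continuity x : continuity_pt ps x.
Proof. eapply is_derive_continuity_pt, Hd0. Qed.

Lemma ps1_continuity x : continuity_pt ps1 x.
Proof. eapply is_derive_continuity_pt, Hd1. Qed.

Lemma ps1_increasing x y : x < y -> ps1 x < ps1 y.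
Proof. intros H. apply (is_derive_pos_lt ps1 ps2); auto. intros z _; apply Hpos. Qed.

Definition hfun x := x - ps x / ps1 x.
Definition dhfun x := ps x * ps2 x / (ps1 x) ^ 2.

Lemma hfun_derive x : is_derive hfun x (dhfun x).
Proof.
  unfold hfun, dhfun. destruct (Hpos x) as [P0 [P1 P2]]. auto_derive.
  - repeat split; try (eexists; apply Hd0 || apply Hd1); lra.
  - rewrite (Derive_of_is_derive ps x _ (Hd0 x)), (Derive_of_is_derive ps1 x _ (Hd1 x)). field. lra.
Qed.

Lemma dhfun_gt_0 x : 0 < dhfun x.
Proof. unfold dhfun. destruct (Hpos x) as [P0 [P1 P2]]. apply Rdiv_lt_0_compat; nra. Qed.

Lemma dhfun_continuity x : continuity_pt dhfun x.
Proof.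
  unfold dhfun. destruct (Hpos x) as [P0 [P1 P2]].
  apply (continuity_pt_div (fun x => ps x * ps2 x) (fun x => ps1 x ^ 2)).
  - apply (continuity_pt_mult ps ps2); auto using ps_continuity.
  - apply (continuity_pt_mult ps1 (fun x => ps1 x ^ 1)); [apply ps1_continuity|].
    apply (continuity_pt_mult ps1 (fun _ => 1)); [apply ps1_continuity | apply continuity_pt_const; intros a b; auto].
  - apply pow_nonzero. lra.
Qed.

Lemma hfun_increasing x y : x < y -> hfun x < hfun y.
Proof.
  intros H. apply (is_derive_pos_lt hfun dhfun); auto.
  - intros; apply hfun_derive.
  - intros; apply dhfun_gt_0.
Qed.

(** [psi'' > 0] in the ODE gives [psi / psi' > theta (mu - x) / lambda]. *)
Lemma hfun_lt_affine x : hfun x < x - theta * (mu - x) / lam.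
Proof.
  unfold hfun. destruct (Hpos x) as [P0 [P1 P2]]. pose proof (Hode x).
  assert (0 < / 2 * sigma ^ 2 * ps2 x).
  { apply Rmult_lt_0_compat; auto. apply Rmult_lt_0_compat; [lra | apply pow_lt; lra]. }
  assert (theta * (mu - x) / lam < ps x / ps1 x); [|lra].
  apply Rmult_lt_reg_r with (lam * ps1 x); [nra|].
  replace (theta * (mu - x) / lam * (lam * ps1 x)) with (theta * (mu - x) * ps1 x) by (field; lra).
  replace (ps x / ps1 x * (lam * ps1 x)) with (lam * ps x) by (field; lra). lra.
Qed.

Lemma dhfun_ode x :
  dhfun x = 2 / sigma ^ 2 * (ps x / ps1 x) * (lam * (ps x / ps1 x) + theta * (x - mu)).
Proof.
  unfold dhfun. destruct (Hpos x) as [P0 [P1 P2]].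
  replace (ps2 x) with (2 / sigma ^ 2 * (lam * ps x - theta * (mu - x) * ps1 x)).
  - field. split; lra.
  - rewrite <- (Hode x). field. lra.
Qed.

(** If [h <= v] everywhere, then [psi / psi' >= x - v], and the ODE makes [h' >= 2] far right. *)
Lemma hfun_unbounded v : exists x, v < hfun x.
Proof.
  apply NNPP. intro Hn.
  assert (Hle : forall x, hfun x <= v) by (intros x; apply Rnot_lt_le; intro; apply Hn; exists x; auto).
  set (X := Rmax (mu + 1) (v + sigma ^ 2 / theta)).
  assert (HX1 : mu + 1 <= X) by apply Rmax_l.
  assert (HX2 : v + sigma ^ 2 / theta <= X) by apply Rmax_r.
  assert (Hs2 : 0 < sigma ^ 2) by (apply pow_lt; lra).
  assert (Hbig : forall x, X <= x -> 2 <= dhfun x).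
  { intros x Hx. rewrite dhfun_ode. set (r := ps x / ps1 x).
    assert (r >= x - v) by (pose proof (Hle x) as Hhx; unfold hfun in Hhx; fold r in Hhx; lra).
    assert (0 < r) by (unfold r; destruct (Hpos x) as [P0 [P1 P2]]; apply Rdiv_lt_0_compat; auto).
    assert (sigma ^ 2 <= theta * r).
    { apply Rmult_le_reg_r with (/ theta); [apply Rinv_0_lt_compat; auto|].
      replace (theta * r * / theta) with r by (field; lra). unfold Rdiv in *. lra. }
    assert (sigma ^ 2 <= lam * r * r + theta * r * (x - mu)) by nra.
    replace (2 / sigma ^ 2 * r * (lam * r + theta * (x - mu))) with
      (2 / sigma ^ 2 * (lam * r * r + theta * r * (x - mu))) by ring.
    apply Rle_trans with (2 / sigma ^ 2 * sigma ^ 2); [right; field; lra|].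
    apply Rmult_le_compat_l; auto. apply Rdiv_le_0_compat; lra. }
  set (b := X + Rabs (v - hfun X) + 1).
  assert (hfun X - X < hfun b - b).
  { apply (is_derive_pos_lt (fun x => hfun x - x) (fun x => dhfun x - 1)).
    - intros x Hx. auto_derive; [exists (dhfun x); apply hfun_derive|].
      rewrite (Derive_of_is_derive hfun x _ (hfun_derive x)). ring.
    - intros x Hx. pose proof (Hbig x ltac:(lra)). lra.
    - unfold b. pose proof (Rabs_pos (v - hfun X)). lra. }
  pose proof (Hle b). pose proof (Rle_abs (v - hfun X)). unfold b in *. lra.
Qed.

Lemma hfun_surjective y : exists x, hfun x = y.
Proof.
  destruct (hfun_unbounded y) as [xh Hxh].
  assert (Htl : 0 < theta / lam) by (apply Rdiv_lt_0_compat; lra).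
  set (xl := Rmin (xh - 1) ((y + theta * mu / lam) / (1 + theta / lam) - 1)).
  assert (Hxl : hfun xl < y).
  { pose proof (hfun_lt_affine xl).
    assert (xl <= (y + theta * mu / lam) / (1 + theta / lam) - 1) by apply Rmin_r.
    assert (xl - theta * (mu - xl) / lam = xl * (1 + theta / lam) - theta * mu / lam) by (field; lra).
    assert (xl * (1 + theta / lam) <=
            ((y + theta * mu / lam) / (1 + theta / lam) - 1) * (1 + theta / lam))
      by (apply Rmult_le_compat_r; lra).
    replace (((y + theta * mu / lam) / (1 + theta / lam) - 1) * (1 + theta / lam)) with
      (y + theta * mu / lam - (1 + theta / lam)) in * by (field; lra).
    lra. }
  assert (xl < xh) by (unfold xl; pose proof (Rmin_l (xh - 1) ((y + theta * mu / lam) / (1 + theta / lam) - 1)); lra).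
  destruct (IVT_cor (fun x => hfun x - y) xl xh) as [z [Hz E]].
  - apply continuity_minus; [intro; eapply is_derive_continuity_pt, hfun_derive|].
    apply continuity_const. intros a b; auto.
  - lra.
  - assert (hfun xl - y < 0) by lra. assert (0 < hfun xh - y) by lra. nra.
  - exists z. lra.
Qed.

Definition hinv y := epsilon (inhabits 0) (fun x => hfun x = y).

Lemma hfun_hinv y : hfun (hinv y) = y.
Proof. apply (epsilon_spec (inhabits 0) (fun x => hfun x = y)), hfun_surjective. Qed.

Lemma hfun_inj x y : hfun x = hfun y -> x = y.
Proof.
  intros E. destruct (Rtotal_order x y) as [H|[H|H]]; auto.
  - pose proof (hfun_increasing x y H); lra.
  - pose proof (hfun_increasing y x H); lra.
Qed.

Lemma hinv_hfun x : hinv (hfun x) = x.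
Proof. apply hfun_inj, hfun_hinv. Qed.

Lemma hinv_increasing a b : a < b -> hinv a < hinv b.
Proof.
  intros H. destruct (Rlt_le_dec (hinv a) (hinv b)) as [H1|[H1|H1]]; auto; exfalso.
  - pose proof (hfun_increasing _ _ H1) as H2. rewrite !hfun_hinv in H2. lra.
  - pose proof (f_equal hfun H1) as H2. rewrite !hfun_hinv in H2. lra.
Qed.

Lemma hinv_continuity y : continuity_pt hinv y.
Proof.
  intros eps He. set (x0 := hinv y).
  assert (A1 : hfun (x0 - eps) < y) by (rewrite <- (hfun_hinv y); apply hfun_increasing; unfold x0; lra).
  assert (A2 : y < hfun (x0 + eps)) by (rewrite <- (hfun_hinv y); apply hfun_increasing; unfold x0; lra).
  exists (Rmin (y - hfun (x0 - eps)) (hfun (x0 + eps) - y)). split; [apply Rmin_glb_lt; lra|].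
  intros y' [_ Hy']. simpl in *. unfold R_dist in *.
  pose proof (Rmin_l (y - hfun (x0 - eps)) (hfun (x0 + eps) - y)).
  pose proof (Rmin_r (y - hfun (x0 - eps)) (hfun (x0 + eps) - y)).
  assert (B1 : hfun (x0 - eps) < y') by (revert Hy'; unfold Rabs; case Rcase_abs; intros; lra).
  assert (B2 : y' < hfun (x0 + eps)) by (revert Hy'; unfold Rabs; case Rcase_abs; intros; lra).
  apply hinv_increasing in B1. apply hinv_increasing in B2. rewrite hinv_hfun in B1, B2.
  fold x0. unfold Rabs; case Rcase_abs; intros; lra.
Qed.

Lemma hinv_derive y : is_derive hinv y (/ dhfun (hinv y)).
Proof.
  apply is_derive_Reals.
  assert (Prf : forall a, hinv (y - 1) <= a <= hinv (y + 1) -> derivable_pt hfun a).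
  { intros a _. exists (dhfun a). apply is_derive_Reals, hfun_derive. }
  assert (Hinc : hinv (y - 1) <= hinv y <= hinv (y + 1)) by (split; left; apply hinv_increasing; lra).
  pose proof (derivable_pt_lim_recip_interv hfun hinv (y - 1) (y + 1) y Prf (hinv_continuity y)
     ltac:(lra) ltac:(lra) Hinc) as H.
  assert (Hd : derive_pt hfun (hinv y) (Prf (hinv y) Hinc) = dhfun (hinv y))
    by (apply derive_pt_eq_0, is_derive_Reals, hfun_derive).
  rewrite Hd in H. replace (/ dhfun (hinv y)) with (1 / dhfun (hinv y)) by (unfold Rdiv; ring).
  apply H.
  - intros x0 _. apply hfun_hinv.
  - pose proof (dhfun_gt_0 (hinv y)). lra.
Qed.

Hypothesis HdPhic : forall c, continuity_pt dPhi c.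

Let zt := zeta theta lam Phi.
Let kf := kfun theta lam dPhi.

Definition gamma c := hinv (x0bar theta mu lam Phi c).
Definition dgamma c := dx0bar c / dhfun (gamma c).

Lemma gamma_spec c : ps (gamma c) / ps1 (gamma c) = gamma c - x0bar theta mu lam Phi c.
Proof. pose proof (hfun_hinv (x0bar theta mu lam Phi c)) as H. unfold hfun in H. unfold gamma. lra. Qed.

Lemma gamma_unique c x : ps x / ps1 x = x - x0bar theta mu lam Phi c -> x = gamma c.
Proof.
  intros E. unfold gamma. replace (x0bar theta mu lam Phi c) with (hfun x) by (unfold hfun; lra).
  symmetry. apply hinv_hfun.
Qed.

Lemma x0bar_lt_gamma c : x0bar theta mu lam Phi c < gamma c.
Proof.
  pose proof (gamma_spec c). destruct (Hpos (gamma c)) as [P0 [P1 _]].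
  assert (0 < ps (gamma c) / ps1 (gamma c)) by (apply Rdiv_lt_0_compat; auto). lra.
Qed.

Lemma gamma_decreasing c1 c2 : I01 c1 -> I01 c2 -> c1 < c2 -> gamma c2 < gamma c1.
Proof. intros. apply hinv_increasing, x0bar_decreasing; auto. Qed.

Lemma gamma_derive c : I01 c -> is_derive gamma c (dgamma c).
Proof.
  intros H. unfold gamma, dgamma.
  pose proof (is_derive_comp hinv (x0bar theta mu lam Phi) c _ _
                (hinv_derive (x0bar theta mu lam Phi c)) (x0bar_derive c H)) as E.
  simpl in E. unfold scal in E; simpl in E. unfold mult in E; simpl in E.
  exact E.
Qed.

Lemma gamma_continuity c : I01 c -> continuity_pt gamma c.
Proof. intros H. eapply is_derive_continuity_pt, gamma_derive, H. Qed.

Lemma dgamma_lt_0 c : I01 c -> dgamma c < 0.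
Proof.
  intros H. unfold dgamma. pose proof (dx0bar_lt_0 c H). pose proof (dhfun_gt_0 (gamma c)).
  assert (0 < / dhfun (gamma c)) by (apply Rinv_0_lt_compat; auto). unfold Rdiv. nra.
Qed.

Lemma Phi_continuity c : continuity_pt Phi c.
Proof. eapply derivable_pt_lim_continuity_pt, HdPhi. Qed.

Lemma zeta_continuity c : continuity_pt zt c.
Proof. eapply is_derive_continuity_pt, zeta_derive. Qed.

Lemma kfun_continuity c : continuity_pt kf c.
Proof.
  unfold kf, kfun. apply (continuity_pt_plus (fun _ => lam + theta) (fun c => lam * dPhi c)).
  - apply continuity_pt_const. intros a b; auto.
  - apply (continuity_pt_scal dPhi); auto.
Qed.

Lemma continuity_pt_sqr f c : continuity_pt f c -> continuity_pt (fun c => f c ^ 2) c.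
Proof.
  intros H. apply (continuity_pt_mult f (fun c => f c ^ 1)); auto.
  apply (continuity_pt_mult f (fun _ => 1)); auto. apply continuity_pt_const. intros a b; auto.
Qed.

Lemma dgamma_continuity c : I01 c -> continuity_pt dgamma c.
Proof.
  intros H. assert (Hz : zt c < 0) by exact (zeta_lt_0 c H). pose proof (dhfun_gt_0 (gamma c)).
  unfold dgamma, dx0bar.
  apply (continuity_pt_div (fun c => theta * mu * (dPhi c * zt c + kf c * Phi c) / zt c ^ 2)
                           (fun c => dhfun (gamma c))).
  - apply (continuity_pt_div (fun c => theta * mu * (dPhi c * zt c + kf c * Phi c)) (fun c => zt c ^ 2)).
    + apply (continuity_pt_scal (fun c => dPhi c * zt c + kf c * Phi c)).
      apply (continuity_pt_plus (fun c => dPhi c * zt c) (fun c => kf c * Phi c)).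
      * apply (continuity_pt_mult dPhi zt); auto using zeta_continuity.
      * apply (continuity_pt_mult kf Phi); auto using kfun_continuity, Phi_continuity.
    + apply continuity_pt_sqr, zeta_continuity.
    + apply pow_nonzero. lra.
  - apply (continuity_pt_comp gamma dhfun); auto using gamma_continuity, dhfun_continuity.
  - lra.
Qed.

(** [Bcoef] is the coefficient of [psi x] in [W], simplified with [psi (gamma c) = psi' (gamma c) (gamma c - x0bar c)]. *)
Definition Bcoef c := zt c / ((lam + theta) * ps1 (gamma c)).
Definition dBcoef c :=
  (- kf c * ps1 (gamma c) - zt c * ps2 (gamma c) * dgamma c) / ((lam + theta) * ps1 (gamma c) ^ 2).

Definition W_left x c := Bcoef c * ps x + lam * Phi c * ((x - mu) / (lam + theta) + mu / lam).
Definition W_left_x x c := Bcoef c * ps1 x + lam * Phi c / (lam + theta).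
Definition W_left_xx x c := Bcoef c * ps2 x.
Definition W_left_c x c := dBcoef c * ps x + lam * dPhi c * ((x - mu) / (lam + theta) + mu / lam).
Definition W_left_cx x c := dBcoef c * ps1 x + lam * dPhi c / (lam + theta).

Lemma ps1_gamma_derive c : I01 c -> is_derive (fun c => ps1 (gamma c)) c (ps2 (gamma c) * dgamma c).
Proof.
  intros H. pose proof (is_derive_comp ps1 gamma c _ _ (Hd1 (gamma c)) (gamma_derive c H)) as E.
  simpl in E. unfold scal in E; simpl in E; unfold mult in E; simpl in E. rewrite Rmult_comm. exact E.
Qed.

Lemma Bcoef_derive c : I01 c -> is_derive Bcoef c (dBcoef c).
Proof.
  intros H. unfold Bcoef, dBcoef. destruct (Hpos (gamma c)) as [P0 [P1 P2]].
  assert (E1 := zeta_derive c). fold zt kf in E1.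
  assert (E2 := ps1_gamma_derive c H).
  assert (E3 : is_derive (fun c => / ((lam + theta) * ps1 (gamma c))) c
                 (- ((lam + theta) * (ps2 (gamma c) * dgamma c)) / ((lam + theta) * ps1 (gamma c)) ^ 2)).
  { apply (is_derive_inv (fun c => (lam + theta) * ps1 (gamma c))); [|nra].
    apply (is_derive_scal (fun c => ps1 (gamma c)) c (lam + theta)). auto. }
  pose proof (is_derive_mult zt _ c _ _ E1 E3 ltac:(intros; apply Rmult_comm)) as E4.
  simpl in E4. unfold mult, plus in E4; simpl in E4.
  replace ((- kf c * ps1 (gamma c) - zt c * ps2 (gamma c) * dgamma c) / ((lam + theta) * ps1 (gamma c) ^ 2))
    with (- kf c * / ((lam + theta) * ps1 (gamma c))
          + zt c * (- ((lam + theta) * (ps2 (gamma c) * dgamma c)) / ((lam + theta) * ps1 (gamma c)) ^ 2))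
    by (field; lra).
  exact E4.
Qed.

Lemma Bcoef_continuity c : I01 c -> continuity_pt Bcoef c.
Proof. intros H. eapply is_derive_continuity_pt, Bcoef_derive, H. Qed.

Lemma dBcoef_continuity c : I01 c -> continuity_pt dBcoef c.
Proof.
  intros H. destruct (Hpos (gamma c)) as [P0 [P1 P2]]. unfold dBcoef.
  assert (C1 : continuity_pt (fun c => ps1 (gamma c)) c)
    by (apply (continuity_pt_comp gamma ps1); auto using gamma_continuity, ps1_continuity).
  assert (C2 : continuity_pt (fun c => ps2 (gamma c)) c)
    by (apply (continuity_pt_comp gamma ps2); auto using gamma_continuity).
  apply (continuity_pt_div (fun c => - kf c * ps1 (gamma c) - zt c * ps2 (gamma c) * dgamma c)
                           (fun c => (lam + theta) * ps1 (gamma c) ^ 2)).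
  - apply (continuity_pt_minus (fun c => - kf c * ps1 (gamma c)) (fun c => zt c * ps2 (gamma c) * dgamma c)).
    + apply (continuity_pt_mult (fun c => - kf c) (fun c => ps1 (gamma c))); auto.
      apply (continuity_pt_opp kf), kfun_continuity.
    + apply (continuity_pt_mult (fun c => zt c * ps2 (gamma c)) dgamma); auto using dgamma_continuity.
      apply (continuity_pt_mult zt (fun c => ps2 (gamma c))); auto using zeta_continuity.
  - apply (continuity_pt_scal (fun c => ps1 (gamma c) ^ 2)), continuity_pt_sqr, C1.
  - assert (0 < ps1 (gamma c) ^ 2) by (apply pow_lt; auto). nra.
Qed.

Definition W x c :=
  if Rle_dec 1 c then 0
  else if Rlt_dec x (gamma c) then
    ps x / ps (gamma c) *
      (gamma c * (1 - c) - lam * Phi c * ((gamma c - mu) / (lam + theta) + mu / lam))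
    + lam * Phi c * ((x - mu) / (lam + theta) + mu / lam)
  else x * (1 - c).

Lemma ps_gamma c : ps (gamma c) = ps1 (gamma c) * (gamma c - theta * mu * Phi c / zt c).
Proof.
  pose proof (gamma_spec c) as H. destruct (Hpos (gamma c)) as [P0 [P1 _]].
  unfold x0bar in H. fold zt in H. rewrite <- H. field. lra.
Qed.

(** [(lambda + theta)] times the bracket in [W]; its sign makes the simplification to [Bcoef] legitimate. *)
Lemma gamma_zeta_lt c : I01 c -> gamma c * zt c - theta * mu * Phi c < 0.
Proof.
  intros H. assert (Hz : zt c < 0) by exact (zeta_lt_0 c H). pose proof (x0bar_lt_gamma c) as Hg.
  unfold x0bar in Hg. fold zt in Hg.
  replace (gamma c * zt c - theta * mu * Phi c)
    with (zt c * (gamma c - theta * mu * Phi c / zt c)) by (field; lra).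
  nra.
Qed.

Lemma W_below_gamma x c : I01 c -> x < gamma c -> W x c = W_left x c.
Proof.
  intros H Hx. unfold W. destruct (Rle_dec 1 c); [unfold I01 in H; lra|].
  destruct (Rlt_dec x (gamma c)); [|lra].
  unfold W_left, Bcoef. assert (Hz : zt c < 0) by exact (zeta_lt_0 c H). pose proof (gamma_zeta_lt c H).
  pose proof (x0bar_lt_gamma c). unfold x0bar in *.
  destruct (Hpos (gamma c)) as [P0 [P1 _]]. rewrite ps_gamma.
  unfold zt, zeta in *. field. repeat split; lra.
Qed.

Lemma W_above_gamma x c : I01 c -> gamma c <= x -> W x c = x * (1 - c).
Proof.
  intros H Hx. unfold W. destruct (Rle_dec 1 c); [unfold I01 in H; lra|].
  destruct (Rlt_dec x (gamma c)); [lra | auto].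
Qed.

Lemma W_left_at_gamma c : I01 c -> W_left (gamma c) c = gamma c * (1 - c).
Proof.
  intros H. unfold W_left, Bcoef. assert (Hz : zt c < 0) by exact (zeta_lt_0 c H).
  pose proof (x0bar_lt_gamma c). unfold x0bar in *.
  destruct (Hpos (gamma c)) as [P0 [P1 _]]. rewrite ps_gamma.
  unfold zt, zeta in *. field. repeat split; lra.
Qed.

Lemma W_left_x_at_gamma c : W_left_x (gamma c) c = 1 - c.
Proof.
  unfold W_left_x, Bcoef. destruct (Hpos (gamma c)) as [P0 [P1 _]].
  unfold zt, zeta. field; repeat split; lra.
Qed.

Lemma W_left_c_at_gamma c : I01 c -> W_left_c (gamma c) c = - gamma c.
Proof.
  intros H. unfold W_left_c, dBcoef, dgamma, dhfun, dx0bar.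
  assert (Hz : zt c < 0) by exact (zeta_lt_0 c H).
  pose proof (x0bar_lt_gamma c). pose proof (gamma_zeta_lt c H). unfold x0bar in *.
  destruct (Hpos (gamma c)) as [P0 [P1 P2]]. rewrite ps_gamma. fold zt kf. unfold kf, kfun.
  field. repeat split; lra.
Qed.

(** [W_cx (gamma-, c) + 1 = - zeta gamma' psi''(gamma) / ((lambda + theta) psi'(gamma))], and [zeta, gamma' < 0]. *)
Lemma W_left_cx_at_gamma_lt c : I01 c -> W_left_cx (gamma c) c < -1.
Proof.
  intros H. assert (Hz : zt c < 0) by exact (zeta_lt_0 c H). pose proof (dgamma_lt_0 c H).
  destruct (Hpos (gamma c)) as [P0 [P1 P2]].
  assert (E : W_left_cx (gamma c) c + 1 =
              - (zt c * dgamma c) * (ps2 (gamma c) / ((lam + theta) * ps1 (gamma c)))).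
  { unfold W_left_cx, dBcoef, kf, kfun. field; repeat split; lra. }
  assert (0 < zt c * dgamma c) by nra.
  assert (0 < ps2 (gamma c) / ((lam + theta) * ps1 (gamma c))) by (apply Rdiv_lt_0_compat; nra).
  nra.
Qed.

Lemma W_left_derive_x x c : is_derive (fun y => W_left y c) x (W_left_x x c).
Proof.
  unfold W_left, W_left_x. auto_derive; [eexists; eauto|].
  rewrite (Derive_of_is_derive ps x _ (Hd0 x)). field; repeat split; lra.
Qed.

Lemma W_left_x_derive_x x c : is_derive (fun y => W_left_x y c) x (W_left_xx x c).
Proof.
  unfold W_left_x, W_left_xx. auto_derive; [eexists; eauto|].
  rewrite (Derive_of_is_derive ps1 x _ (Hd1 x)). ring.
Qed.

Lemma W_left_c_derive_x x c : is_derive (fun y => W_left_c y c) x (W_left_cx x c).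
Proof.
  unfold W_left_c, W_left_cx. auto_derive; [eexists; eauto|].
  rewrite (Derive_of_is_derive ps x _ (Hd0 x)). field; repeat split; lra.
Qed.

Lemma W_left_derive_c x c : I01 c -> is_derive (fun d => W_left x d) c (W_left_c x c).
Proof.
  intros H. unfold W_left, W_left_c.
  pose proof (Bcoef_derive c H) as HB. pose proof (proj2 (is_derive_Reals _ _ _) (HdPhi c)) as HP.
  auto_derive; [split; [eexists; eauto | split; [eexists; eauto | auto]]|].
  rewrite (Derive_of_is_derive Bcoef c _ HB), (Derive_of_is_derive Phi c _ HP). ring.
Qed.

Lemma W_left_ode x c :
  / 2 * sigma ^ 2 * W_left_xx x c + theta * (mu - x) * W_left_x x c - lam * W_left x c
  = - lam * x * Phi c.
Proof.
  unfold W_left, W_left_x, W_left_xx.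
  transitivity (Bcoef c * (/ 2 * sigma ^ 2 * ps2 x + theta * (mu - x) * ps1 x - lam * ps x)
                - lam * x * Phi c); [field; repeat split; lra|].
  rewrite Hode. ring.
Qed.

(** [W_left_c + x] decreases on [(-oo, gamma c]] and vanishes at [gamma c]. *)
Lemma W_left_c_ge x c : I01 c -> x <= gamma c -> - x <= W_left_c x c.
Proof.
  intros H Hx.
  assert (Hneg : forall y, y <= gamma c -> W_left_cx y c + 1 < 0).
  { intros y Hy. pose proof (W_left_cx_at_gamma_lt c H). unfold W_left_cx in *.
    assert (lam * dPhi c / (lam + theta) + 1 < 0).
    { pose proof (Hk c ltac:(unfold I01 in H; lra)). unfold kfun in *.
      apply Rmult_lt_reg_r with (lam + theta); [lra|].
      unfold Rdiv. rewrite Rmult_plus_distr_r, Rmult_assoc, Rinv_l by lra. lra. }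
    destruct (Rle_lt_dec (dBcoef c) 0) as [Hb|Hb].
    - destruct (Hpos y) as [_ [P1 _]]. nra.
    - destruct Hy as [Hy|Hy]; [|subst y; lra]. pose proof (ps1_increasing y (gamma c) Hy). nra. }
  destruct Hx as [Hx|Hx]; [|subst x; rewrite W_left_c_at_gamma by exact H; lra].
  assert (- (W_left_c x c + x) < - (W_left_c (gamma c) c + gamma c)); [|rewrite W_left_c_at_gamma in * by exact H; lra].
  apply (is_derive_pos_lt (fun y => - (W_left_c y c + y)) (fun y => - (W_left_cx y c + 1))); auto.
  - intros y _. auto_derive; [exists (W_left_cx y c); apply W_left_c_derive_x|].
    rewrite (Derive_of_is_derive (fun y => W_left_c y c) y _ (W_left_c_derive_x y c)). ring.
  - intros y Hy. pose proof (Hneg y ltac:(lra)). lra.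
Qed.

Lemma gamma_gt_near x c : I01 c -> x < gamma c ->
  exists d, 0 < d /\ forall e, Rabs (e - c) < d -> x < gamma e.
Proof.
  intros H Hx. destruct (gamma_continuity c H (gamma c - x) ltac:(lra)) as [a [Ha Hy]].
  exists a. split; auto. intros e He. destruct (Req_dec e c) as [->|Hne]; auto.
  assert (K : R_dist (gamma e) (gamma c) < gamma c - x) by (apply Hy; repeat split; auto).
  unfold R_dist in K. revert K; unfold Rabs; case Rcase_abs; intros; lra.
Qed.

Lemma gamma_lt_near x c : I01 c -> gamma c < x ->
  exists d, 0 < d /\ forall e, Rabs (e - c) < d -> gamma e < x.
Proof.
  intros H Hx. destruct (gamma_continuity c H (x - gamma c) ltac:(lra)) as [a [Ha Hy]].
  exists a. split; auto. intros e He. destruct (Req_dec e c) as [->|Hne]; auto.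
  assert (K : R_dist (gamma e) (gamma c) < x - gamma c) by (apply Hy; repeat split; auto).
  unfold R_dist in K. revert K; unfold Rabs; case Rcase_abs; intros; lra.
Qed.

Definition Wx x c := if Rlt_dec x (gamma c) then W_left_x x c else 1 - c.
Definition Wxx x c := if Rlt_dec x (gamma c) then W_left_xx x c else 0.
Definition Wc x c := if Rlt_dec x (gamma c) then W_left_c x c else - x.
Definition Wcx x c := if Rlt_dec x (gamma c) then W_left_cx x c else -1.

Lemma W_derive_x x c : I01 c -> derivable_pt_lim (fun y => W y c) x (Wx x c).
Proof.
  intros H. unfold Wx. destruct (Rlt_dec x (gamma c)) as [Hl|Hl].
  - apply (derivable_pt_lim_locally_eq _ (fun y => W_left y c)).
    + exists (gamma c - x). split; [lra|]. intros y Hy. apply W_below_gamma; eauto using Rabs_sub_lt_lt.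
    + apply is_derive_Reals, W_left_derive_x.
  - assert (Hlin : derivable_pt_lim (fun y => y * (1 - c)) x (1 - c))
      by (apply is_derive_Reals; auto_derive; auto; ring).
    destruct (Rle_lt_or_eq_dec _ _ (Rnot_lt_le _ _ Hl)) as [Hg|Hg].
    + apply (derivable_pt_lim_locally_eq _ (fun y => y * (1 - c))); auto.
      exists (x - gamma c). split; [lra|]. intros y Hy. apply W_above_gamma; auto.
      left; eauto using Rabs_sub_lt_gt.
    + subst x. apply (derivable_pt_lim_piecewise _ (fun y => W_left y c) (fun y => y * (1 - c))); auto.
      * intros y. destruct (Rlt_dec y (gamma c)).
        -- left; apply W_below_gamma; auto.
        -- right; apply W_above_gamma; auto; lra.
      * rewrite W_above_gamma, W_left_at_gamma; auto; lra.
      * apply W_above_gamma; auto; lra.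
      * rewrite <- (W_left_x_at_gamma c). apply is_derive_Reals, W_left_derive_x.
Qed.

Lemma Wx_derive_x x c : x <> gamma c -> derivable_pt_lim (fun y => Wx y c) x (Wxx x c).
Proof.
  intros Hne. unfold Wxx. destruct (Rlt_dec x (gamma c)) as [Hl|Hl].
  - apply (derivable_pt_lim_locally_eq _ (fun y => W_left_x y c)).
    + exists (gamma c - x). split; [lra|]. intros y Hy. unfold Wx.
      destruct (Rlt_dec y (gamma c)) as [|Hn]; auto. exfalso; eauto using Rabs_sub_lt_lt.
    + apply is_derive_Reals, W_left_x_derive_x.
  - apply (derivable_pt_lim_locally_eq _ (fun y => 1 - c)).
    + exists (x - gamma c). split; [lra|]. intros y Hy. unfold Wx.
      destruct (Rlt_dec y (gamma c)) as [Hy'|]; auto.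
      pose proof (Rabs_sub_lt_gt x y (gamma c) ltac:(lra) Hy). lra.
    + apply derivable_pt_lim_const.
Qed.

Lemma W_deriv_within_c x c : I01 c -> deriv_within I01 (fun d => W x d) c (Wc x c).
Proof.
  intros H. unfold Wc.
  assert (Hlin : forall y, deriv_within I01 (fun e => y * (1 - e)) c (- y))
    by (intros; apply deriv_within_of_derivable, is_derive_Reals; auto_derive; auto; ring).
  destruct (Rlt_dec x (gamma c)) as [Hl|Hl].
  - destruct (gamma_gt_near x c H Hl) as [d [Hd Hn]].
    apply (deriv_within_locally_eq _ _ (fun e => W_left x e)); auto.
    + exists d. split; auto. intros e He Hed. apply W_below_gamma; auto.
    + apply deriv_within_of_derivable, is_derive_Reals, W_left_derive_c; auto.
  - destruct (Rle_lt_or_eq_dec _ _ (Rnot_lt_le _ _ Hl)) as [Hg|Hg].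
    + destruct (gamma_lt_near x c H Hg) as [d [Hd Hn]].
      apply (deriv_within_locally_eq _ _ (fun e => x * (1 - e))); auto.
      exists d. split; auto. intros e He Hed. apply W_above_gamma; auto. left; auto.
    + subst x. apply (deriv_within_piecewise _ _ (fun e => W_left (gamma c) e) (fun e => gamma c * (1 - e))); auto.
      * intros e He. destruct (Rlt_dec (gamma c) (gamma e)).
        -- left; apply W_below_gamma; auto.
        -- right; apply W_above_gamma; auto; lra.
      * rewrite W_above_gamma, W_left_at_gamma; auto; lra.
      * apply W_above_gamma; auto; lra.
      * rewrite <- (W_left_c_at_gamma c H).
        apply deriv_within_of_derivable, is_derive_Reals, W_left_derive_c; auto.
Qed.

Lemma Wc_derive_x x c : x <> gamma c -> derivable_pt_lim (fun y => Wc y c) x (Wcx x c).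
Proof.
  intros Hne. unfold Wcx. destruct (Rlt_dec x (gamma c)) as [Hl|Hl].
  - apply (derivable_pt_lim_locally_eq _ (fun y => W_left_c y c)).
    + exists (gamma c - x). split; [lra|]. intros y Hy. unfold Wc.
      destruct (Rlt_dec y (gamma c)) as [|Hn]; auto. exfalso; eauto using Rabs_sub_lt_lt.
    + apply is_derive_Reals, W_left_c_derive_x.
  - apply (derivable_pt_lim_locally_eq _ (fun y => - y)).
    + exists (x - gamma c). split; [lra|]. intros y Hy. unfold Wc.
      destruct (Rlt_dec y (gamma c)) as [Hy'|]; auto.
      pose proof (Rabs_sub_lt_gt x y (gamma c) ltac:(lra) Hy). lra.
    + apply is_derive_Reals. auto_derive; auto.
Qed.

Lemma W_ode x c : I01 c -> x < gamma c ->
  / 2 * sigma ^ 2 * Wxx x c + theta * (mu - x) * Wx x c - lam * W x c = - lam * x * Phi c.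
Proof.
  intros H Hx. rewrite W_below_gamma by auto. unfold Wx, Wxx.
  destruct (Rlt_dec x (gamma c)); [apply W_left_ode | lra].
Qed.

Lemma Wc_ge x c : I01 c -> Wc x c >= - x.
Proof.
  intros H. unfold Wc. destruct (Rlt_dec x (gamma c)) as [Hl|Hl]; [|lra].
  apply Rle_ge, W_left_c_ge; auto; lra.
Qed.

Lemma Wcx_left_limit c : I01 c ->
  limit1_in (fun y => Wcx y c) (fun y => y < gamma c) (W_left_cx (gamma c) c) (gamma c).
Proof.
  intros H.
  assert (Hc : continuity_pt (fun y => W_left_cx y c) (gamma c)).
  { eapply is_derive_continuity_pt. unfold W_left_cx. auto_derive; [eexists; apply Hd1 | reflexivity]. }
  intros eps He. destruct (limit1_in_continuity_pt (fun y => y < gamma c) _ _ Hc eps He) as [a [Ha Hy]].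
  exists a. split; auto.
  intros y [Dy Hd]. unfold Wcx. destruct (Rlt_dec y (gamma c)); [apply Hy; auto | lra].
Qed.

Lemma W_left_derivatives_bounded a b c1 c2 : 0 < c1 -> c2 < 1 ->
  exists M, forall x c, a <= x <= b -> c1 <= c <= c2 ->
    Rabs (W_left_x x c) <= M /\ Rabs (W_left_c x c) <= M /\ Rabs (W_left_xx x c) <= M.
Proof.
  intros H1 H2.
  assert (HI : forall c, c1 <= c <= c2 -> I01 c) by (intros; unfold I01; lra).
  destruct (continuity_pt_bounded Bcoef c1 c2) as [MB HB]; [intros; apply Bcoef_continuity; auto|].
  destruct (continuity_pt_bounded dBcoef c1 c2) as [MdB HdB]; [intros; apply dBcoef_continuity; auto|].
  destruct (continuity_pt_bounded Phi c1 c2) as [MP HP]; [intros; apply Phi_continuity|].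
  destruct (continuity_pt_bounded dPhi c1 c2) as [MdP HdP]; [intros; auto|].
  destruct (continuity_pt_bounded ps a b) as [M0 HM0]; [intros; apply ps_continuity|].
  destruct (continuity_pt_bounded ps1 a b) as [M1 HM1]; [intros; apply ps1_continuity|].
  destruct (continuity_pt_bounded ps2 a b) as [M2 HM2]; [intros; auto|].
  destruct (continuity_pt_bounded (fun x => (x - mu) / (lam + theta) + mu / lam) a b) as [MA HA].
  { intros x _. apply derivable_pt_lim_continuity_pt with (/ (lam + theta)).
    apply is_derive_Reals. auto_derive; [lra | field; lra]. }
  assert (HD : 0 < / (lam + theta)) by (apply Rinv_0_lt_compat; lra).
  exists (MB * M1 + lam * MP * / (lam + theta) + MdB * M0 + lam * MdP * MA + MB * M2).
  intros x c Hx Hc.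
  specialize (HB c Hc); specialize (HdB c Hc); specialize (HP c Hc); specialize (HdP c Hc).
  specialize (HM0 x Hx); specialize (HM1 x Hx); specialize (HM2 x Hx); specialize (HA x Hx).
  assert (Hlam' : Rabs lam <= lam) by (rewrite Rabs_right; lra).
  assert (HD' : Rabs (/ (lam + theta)) <= / (lam + theta)) by (rewrite Rabs_right; lra).
  assert (T1 : Rabs (W_left_x x c) <= MB * M1 + lam * MP * / (lam + theta)).
  { unfold W_left_x, Rdiv. eapply Rle_trans; [apply Rabs_triang|].
    apply Rplus_le_compat; repeat apply Rabs_mult_le; auto. }
  assert (T2 : Rabs (W_left_c x c) <= MdB * M0 + lam * MdP * MA).
  { unfold W_left_c. eapply Rle_trans; [apply Rabs_triang|].
    apply Rplus_le_compat; repeat apply Rabs_mult_le; auto. }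
  assert (T3 : Rabs (W_left_xx x c) <= MB * M2) by (apply Rabs_mult_le; auto).
  assert (N : forall u v, Rabs u <= v -> 0 <= v) by (intros u v Hu; eapply Rle_trans; [apply Rabs_pos | apply Hu]).
  pose proof (N _ _ HB); pose proof (N _ _ HdB); pose proof (N _ _ HP); pose proof (N _ _ HdP).
  pose proof (N _ _ HM0); pose proof (N _ _ HM1); pose proof (N _ _ HM2); pose proof (N _ _ HA).
  assert (0 <= MB * M1) by nra. assert (0 <= MB * M2) by nra. assert (0 <= MdB * M0) by nra.
  assert (0 <= lam * MP * / (lam + theta)) by (apply Rmult_le_pos; nra).
  assert (0 <= lam * MdP * MA) by (apply Rmult_le_pos; nra).
  repeat split; lra.
Qed.

Lemma W_derivatives_locally_bounded a b c1 c2 : 0 < c1 -> c2 < 1 ->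
  exists M, forall x c, a <= x <= b -> c1 <= c <= c2 ->
    Rabs (Wx x c) <= M /\ Rabs (Wc x c) <= M /\ (x <> gamma c -> Rabs (Wxx x c) <= M).
Proof.
  intros H1 H2. destruct (W_left_derivatives_bounded a b c1 c2 H1 H2) as [M HM].
  exists (Rmax M (1 + Rabs a + Rabs b)). intros x c Hx Hc.
  destruct (HM x c Hx Hc) as [T1 [T2 T3]].
  pose proof (Rmax_l M (1 + Rabs a + Rabs b)); pose proof (Rmax_r M (1 + Rabs a + Rabs b)).
  assert (Rabs (1 - c) <= 1) by (unfold Rabs; case Rcase_abs; intros; lra).
  assert (Rabs (- x) <= Rabs a + Rabs b) by (rewrite Rabs_Ropp; unfold Rabs; repeat case Rcase_abs; intros; lra).
  pose proof (Rabs_pos a); pose proof (Rabs_pos b).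
  unfold Wx, Wc, Wxx. destruct (Rlt_dec x (gamma c)); repeat split; intros; try lra.
  rewrite Rabs_R0; lra.
Qed.

Lemma Deriv_ps x : Deriv ps x = ps1 x.
Proof. apply Deriv_unique, is_derive_Reals, Hd0. Qed.

Lemma free_boundary_solution :
  (forall c, I01 c ->
     ps (gamma c) / Deriv ps (gamma c) = gamma c - x0bar theta mu lam Phi c
     /\ (forall x, ps x / Deriv ps x = x - x0bar theta mu lam Phi c -> x = gamma c)
     /\ x0bar theta mu lam Phi c < gamma c)
  /\ (forall c1 c2, I01 c1 -> I01 c2 -> c1 < c2 -> gamma c2 < gamma c1)
  /\ (exists dgamma : R -> R,
        (forall c, I01 c -> deriv_within I01 gamma c (dgamma c))
        /\ (forall c, I01 c -> limit1_in dgamma I01 (dgamma c) c))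
  /\ (let W := W in
      exists Wx Wxx Wc Wcx : R -> R -> R,
        (forall x c, I01 c -> derivable_pt_lim (fun y => W y c) x (Wx x c))
        /\ (forall x c, I01 c -> x <> gamma c ->
              derivable_pt_lim (fun y => Wx y c) x (Wxx x c))
        /\ (forall x c, I01 c -> deriv_within I01 (fun d => W x d) c (Wc x c))
        /\ (forall a b c1 c2, 0 < c1 -> c2 < 1 ->
              exists M, forall x c, a <= x <= b -> c1 <= c <= c2 ->
                Rabs (Wx x c) <= M /\ Rabs (Wc x c) <= M
                /\ (x <> gamma c -> Rabs (Wxx x c) <= M))
        /\ (forall x c, I01 c -> x < gamma c ->
              / 2 * sigma ^ 2 * Wxx x c + theta * (mu - x) * Wx x c - lam * W x c
                = - lam * x * Phi c)
        /\ (forall x c, I01 c -> Wc x c >= - x)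
        /\ (forall x c, I01 c -> x >= gamma c -> W x c = x * (1 - c))
        /\ (forall c, I01 c -> Wx (gamma c) c = 1 - c)
        /\ (forall c, I01 c -> Wc (gamma c) c = - gamma c)
        /\ (forall x c, I01 c -> x <> gamma c ->
              derivable_pt_lim (fun y => Wc y c) x (Wcx x c))
        /\ (forall x c, I01 c -> x > gamma c -> Wcx x c = -1)
        /\ (forall c, I01 c -> exists L,
              limit1_in (fun y => Wcx y c) (fun y => y < gamma c) L (gamma c)
              /\ L < -1)).
Proof.
  split; [|split; [|split]].
  - intros c H. rewrite !Deriv_ps.
    split; [apply gamma_spec | split; [intros x Hx; apply gamma_unique; rewrite Deriv_ps in Hx; auto | apply x0bar_lt_gamma]].
  - apply gamma_decreasing.
  - exists dgamma. split; intros c H.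
    + apply deriv_within_of_derivable, is_derive_Reals, gamma_derive, H.
    + apply limit1_in_continuity_pt, dgamma_continuity, H.
  - exists Wx, Wxx, Wc, Wcx.
    repeat split; intros.
    all: try solve [apply W_derive_x; auto | apply Wx_derive_x; auto | apply W_deriv_within_c; auto
                  | apply W_derivatives_locally_bounded; auto | apply W_ode; auto | apply Wc_ge; auto
                  | apply Wc_derive_x; auto].
    + apply W_above_gamma; auto; lra.
    + unfold Wx. destruct (Rlt_dec (gamma c) (gamma c)); [lra | auto].
    + unfold Wc. destruct (Rlt_dec (gamma c) (gamma c)); [lra | auto].
    + unfold Wcx. destruct (Rlt_dec x (gamma c)); [lra | auto].
    + exists (W_left_cx (gamma c) c). split; [apply Wcx_left_limit | apply W_left_cx_at_gamma_lt]; auto.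
Qed.

End ValueFunction.

End FreeBoundaryProblem.

Theorem mainTheorem10
  (theta sigma mu lam : R) (Phi dPhi d2Phi : R -> R)
  (Htheta : 0 < theta) (Hsigma : 0 < sigma) (Hmu : 0 < mu) (Hlam : 0 < lam)
  (HdPhi : forall x, derivable_pt_lim Phi x (dPhi x))
  (Hd2Phi : forall x, derivable_pt_lim dPhi x (d2Phi x))
  (Hd2cont : continuity d2Phi)
  (Hnoninc : forall x y, x <= y -> Phi y <= Phi x)
  (Hconv : forall x y t, x < y -> 0 < t < 1 ->
             Phi (t * x + (1 - t) * y) < t * Phi x + (1 - t) * Phi y)
  (HPhi1 : Phi 1 = 0)
  (Hk : forall c, 0 <= c <= 1 -> kfun theta lam dPhi c < 0) :
  exists gamma : R -> R,
    (forall c, I01 c ->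
       psi theta sigma mu lam (gamma c) / Deriv (psi theta sigma mu lam) (gamma c)
         = gamma c - x0bar theta mu lam Phi c
       /\ (forall x, psi theta sigma mu lam x / Deriv (psi theta sigma mu lam) x
                       = x - x0bar theta mu lam Phi c -> x = gamma c)
       /\ x0bar theta mu lam Phi c < gamma c)
    /\ (forall c1 c2, I01 c1 -> I01 c2 -> c1 < c2 -> gamma c2 < gamma c1)
    /\ (exists dgamma : R -> R,
          (forall c, I01 c -> deriv_within I01 gamma c (dgamma c))
          /\ (forall c, I01 c -> limit1_in dgamma I01 (dgamma c) c))
    /\ (let W := Wfun theta sigma mu lam Phi gamma in
        exists Wx Wxx Wc Wcx : R -> R -> R,
          (forall x c, I01 c -> derivable_pt_lim (fun y => W y c) x (Wx x c))
          /\ (forall x c, I01 c -> x <> gamma c ->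
                derivable_pt_lim (fun y => Wx y c) x (Wxx x c))
          /\ (forall x c, I01 c -> deriv_within I01 (fun d => W x d) c (Wc x c))
          /\ (forall a b c1 c2, 0 < c1 -> c2 < 1 ->
                exists M, forall x c, a <= x <= b -> c1 <= c <= c2 ->
                  Rabs (Wx x c) <= M /\ Rabs (Wc x c) <= M
                  /\ (x <> gamma c -> Rabs (Wxx x c) <= M))
          /\ (forall x c, I01 c -> x < gamma c ->
                / 2 * sigma ^ 2 * Wxx x c + theta * (mu - x) * Wx x c - lam * W x c
                  = - lam * x * Phi c)
          /\ (forall x c, I01 c -> Wc x c >= - x)
          /\ (forall x c, I01 c -> x >= gamma c -> W x c = x * (1 - c))
          /\ (forall c, I01 c -> Wx (gamma c) c = 1 - c)
          /\ (forall c, I01 c -> Wc (gamma c) c = - gamma c)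
          /\ (forall x c, I01 c -> x <> gamma c ->
                derivable_pt_lim (fun y => Wc y c) x (Wcx x c))
          /\ (forall x c, I01 c -> x > gamma c -> Wcx x c = -1)
          /\ (forall c, I01 c -> exists L,
                limit1_in (fun y => Wcx y c) (fun y => y < gamma c) L (gamma c)
                /\ L < -1)).
Proof.
  set (dpsi := dnpsi theta sigma mu lam).
  assert (Hpsi : psi theta sigma mu lam = dpsi 0%nat)
    by (apply functional_extensionality; intro; apply psi_dnpsi; auto).
  assert (Hd : forall n x, is_derive (dpsi n) x (dpsi (S n) x))
    by (intros; apply is_derive_Reals, dnpsi_derive; auto).
  assert (Hode : forall x, / 2 * sigma ^ 2 * dpsi 2%nat x + theta * (mu - x) * dpsi 1%nat x
                           = lam * psi theta sigma mu lam x)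
    by (intros; rewrite Hpsi; apply dnpsi_ode; auto).
  exists (gamma theta mu lam Phi (psi theta sigma mu lam) (dpsi 1%nat)).
  eapply free_boundary_solution; eauto.
  - intros x. rewrite Hpsi. apply Hd.
  - intros x. eapply is_derive_continuity_pt, Hd.
  - intros x. rewrite Hpsi. repeat split; apply dnpsi_gt_0; auto.
  - intros c. eapply derivable_pt_lim_continuity_pt, Hd2Phi.
Qed.
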